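(* Let $\mathcal{P}re$ be the set of preorders on $\mathcal{SC}$. The map $F:\mathcal{P}re\to\mathcal{P}re$, $F(B)=\sqsubseteq_B$, is well defined and monotone: if $B\subseteq B'$ are preorders then $\sqsubseteq_B\,\subseteq\,\sqsubseteq_{B'}$.
   Context: Fix base types $BT$ with preorder $\leq_{\mathsf b}$ and labels $\mathcal L$. Contract terms: $\sigma::=\mathbf 1\mid ?\mathtt t.\sigma\mid !\mathtt t.\sigma\mid !(\sigma).\sigma\mid ?(\sigma).\sigma\mid \sum_{i\in I}?l_i.\sigma_i\mid \bigoplus_{i\in I}!l_i.\sigma_i\mid \mu x.\sigma\mid x$ ($I$ finite nonempty, labels distinct). $\mathcal{SC}$ = closed guarded terms. LTS: $\mathbf 1\xrightarrow\checkmark$; $\lambda.\sigma\xrightarrow\lambda\sigma$ for prefixes (including $!l.\sigma$); $\bigoplus_{i\in I}!l_i.\sigma_i\xrightarrow\tau!l_i.\sigma_i$ for $|I|>1$; $\sum ?l_i.\sigma_i\xrightarrow{?l_i}\sigma_i$; $\mu x.\sigma\xrightarrow\tau\sigma[\mu x.\sigma/x]$. For $B\subseteq\mathcal{SC}^2$: $\lambda_1\bowtie_B\lambda_2$ iff the pair is $(!l,?l)$, $(?l,!l)$, $(!\mathtt t_1,?\mathtt t_2)$ with $\mathtt t_1\leq_{\mathsf b}\mathtt t_2$, $(?\mathtt t_1,!\mathtt t_2)$ with $\mathtt t_2\leq_{\mathsf b}\mathtt t_1$, $(!(\sigma_1),?(\sigma_2))$ with $\sigma_1B\sigma_2$, $(?(\sigma_1),!(\sigma_2))$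 with $\sigma_2B\sigma_1$. $\rho\|\sigma\xrightarrow\tau_B$ by a $\tau$ of either side or by synchronisation on $\lambda_1\bowtie_B\lambda_2$. $\dashv_B$: greatest $R$ with $\rho R\sigma$ implying (i) if $\rho\|\sigma$ has no $\xrightarrow\tau_B$ move then $\rho\xrightarrow\checkmark$ and $\sigma\xrightarrow\checkmark$; (ii) every $\rho\|\sigma\xrightarrow\tau_B\rho'\|\sigma'$ has $\rho'R\sigma'$. $\sigma_1\sqsubseteq_B\sigma_2$ iff for all $\rho\in\mathcal{SC}$, $\rho\dashv_B\sigma_1$ implies $\rho\dashv_B\sigma_2$. *)

From Stdlib Require Import List.
Import ListNotations.
Set Implicit Arguments.

Section Contracts.
Variables (BT L : Type) (leb : BT -> BT -> Prop).

(* Contract terms.  [Ext bs] = sum_{i} ?l_i.s_i, [Int bs] = oplus_{i} !l_i.s_i;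
   the output prefix !l.s is the singleton [Int [(l,s)]].
   Variables are named by nat. *)
Inductive term : Type :=
| One : term
| InT : BT -> term -> term
| OutT : BT -> term -> term
| OutS : term -> term -> term
| InS : term -> term -> term
| Ext : list (L * term) -> term
| Int : list (L * term) -> term
| Mu : nat -> term -> term
| Var : nat -> term.

Inductive free (x : nat) : term -> Prop :=
| F_Var : free x (Var x)
| F_InT t s : free x s -> free x (InT t s)
| F_OutT t s : free x s -> free x (OutT t s)
| F_OutS1 c s : free x c -> free x (OutS c s)
| F_OutS2 c s : free x s -> free x (OutS c s)
| F_InS1 c s : free x c -> free x (InS c s)
| F_InS2 c s : free x s -> free x (InS c s)
| F_Ext bs l s : In (l, s) bs -> free x s -> free x (Ext bs)
| F_Int bs l s : In (l, s) bs -> free x s -> free x (Int bs)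
| F_Mu y s : x <> y -> free x s -> free x (Mu y s).

Definition closed (s : term) : Prop := forall x, ~ free x s.

Inductive unguarded (x : nat) : term -> Prop :=
| UG_Var : unguarded x (Var x)
| UG_Mu y s : x <> y -> unguarded x s -> unguarded x (Mu y s).

Inductive wfg : term -> Prop :=
| W_One : wfg One
| W_InT t s : wfg s -> wfg (InT t s)
| W_OutT t s : wfg s -> wfg (OutT t s)
| W_OutS c s : wfg c -> wfg s -> wfg (OutS c s)
| W_InS c s : wfg c -> wfg s -> wfg (InS c s)
| W_Ext bs : bs <> [] -> NoDup (map fst bs) ->
    Forall (fun p => wfg (snd p)) bs -> wfg (Ext bs)
| W_Int bs : bs <> [] -> NoDup (map fst bs) ->
    Forall (fun p => wfg (snd p)) bs -> wfg (Int bs)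
| W_Mu x s : ~ unguarded x s -> wfg s -> wfg (Mu x s)
| W_Var x : wfg (Var x).

Definition SC (s : term) : Prop := closed s /\ wfg s.

(* substitution s[t/x]; only used with t closed, so no capture *)
Fixpoint subst (x : nat) (t s : term) {struct s} : term :=
  match s with
  | One => One
  | InT b s' => InT b (subst x t s')
  | OutT b s' => OutT b (subst x t s')
  | OutS c s' => OutS (subst x t c) (subst x t s')
  | InS c s' => InS (subst x t c) (subst x t s')
  | Ext bs => Ext (map (fun p => (fst p, subst x t (snd p))) bs)
  | Int bs => Int (map (fun p => (fst p, subst x t (snd p))) bs)
  | Mu y s' => if Nat.eqb x y then Mu y s' else Mu y (subst x t s')
  | Var y => if Nat.eqb x y then t else Var y
  end.

Inductive action : Type :=
| ACheck : action
| ATau : action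
| AInT : BT -> action
| AOutT : BT -> action
| AOutS : term -> action
| AInS : term -> action
| AInL : L -> action
| AOutL : L -> action.

Inductive step : term -> action -> term -> Prop :=
| St_One : step One ACheck One
| St_InT t s : step (InT t s) (AInT t) s
| St_OutT t s : step (OutT t s) (AOutT t) s
| St_OutS c s : step (OutS c s) (AOutS c) s
| St_InS c s : step (InS c s) (AInS c) s
| St_OutL l s : step (Int [(l, s)]) (AOutL l) s
| St_IntTau bs l s : 1 < length bs -> In (l, s) bs ->
    step (Int bs) ATau (Int [(l, s)])
| St_Ext bs l s : In (l, s) bs -> step (Ext bs) (AInL l) s
| St_Mu x s : step (Mu x s) ATau (subst x (Mu x s) s).

Definition matches (B : term -> term -> Prop) (a1 a2 : action) : Prop :=
  match a1, a2 with
  | AOutL l1, AInL l2 => l1 = l2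
  | AInL l1, AOutL l2 => l1 = l2
  | AOutT t1, AInT t2 => leb t1 t2
  | AInT t1, AOutT t2 => leb t2 t1
  | AOutS s1, AInS s2 => B s1 s2
  | AInS s1, AOutS s2 => B s2 s1
  | _, _ => False
  end.

Inductive sys_tau (B : term -> term -> Prop) : term -> term -> term -> term -> Prop :=
| Sys_L r r' s : step r ATau r' -> sys_tau B r s r' s
| Sys_R r s s' : step s ATau s' -> sys_tau B r s r s'
| Sys_Sync r r' s s' a1 a2 : step r a1 r' -> step s a2 s' -> matches B a1 a2 ->
    sys_tau B r s r' s'.

Definition can_check (s : term) : Prop := exists s', step s ACheck s'.

Definition compliance_rel (B R : term -> term -> Prop) : Prop :=
  forall r s, R r s ->
    ((forall r' s', ~ sys_tau B r s r' s') -> can_check r /\ can_check s) /\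
    (forall r' s', sys_tau B r s r' s' -> R r' s').

Definition complies (B : term -> term -> Prop) (r s : term) : Prop :=
  exists R, compliance_rel B R /\ R r s.

Definition subcontract (B : term -> term -> Prop) (s1 s2 : term) : Prop :=
  SC s1 /\ SC s2 /\ (forall r, SC r -> complies B r s1 -> complies B r s2).

Definition preorder_SC (B : term -> term -> Prop) : Prop :=
  (forall s1 s2, B s1 s2 -> SC s1 /\ SC s2) /\
  (forall s, SC s -> B s s) /\
  (forall s1 s2 s3, B s1 s2 -> B s2 s3 -> B s1 s3).

End Contracts.

(* Reflexivity and transitivity of [subcontract leb B] hold for any [B].
   For monotonicity let [B] be included in [B'], [s1] a B-subcontract of [s2],
   and [r] B'-compliant with [s1] but not with [s2], as witnessed by a failing
   run of [r || s2] of length [n].  From [r] and [s1] we build a client [X]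
   that behaves like [r] but, in every higher-order message, exchanges the
   payload expected by [s1] instead of its own; recursions of [r] are unfolded
   with fuel [n + 1], after which [X] continues as the dual of the current state
   of [s1].  Reflexivity of [B] makes [X] B-compliant with [s1], hence with
   [s2].  Now [X || s2] replays the failing run: a B'-exchange of [r] with [s2]
   becomes a B-exchange of [X], since B-compliance forbids [X] to be stuck on
   it; and every move of [X || s2] yields one of [r || s2], because the payload
   of [r] is B'-related to that of [s1], which is B-related to that of [s2].
   So [X || s2] gets stuck where [r || s2] does, a contradiction. *)

From Stdlib Require Import List Arith Lia Classical ClassicalEpsilon.
Import ListNotations.
Set Implicit Arguments.

Section Subcontracts.
Variables (BT L : Type) (leb : BT -> BT -> Prop).
Hypothesis leb_refl : forall t, leb t t.
Notation term := (term BT L).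
#[local] Arguments One {BT L}.
#[local] Arguments ATau {BT L}.
#[local] Arguments ACheck {BT L}.

(** * Terms, substitution and closed guarded contracts *)

Section TermInd.
Variable P : term -> Prop.
Hypotheses (H1 : P One) (H2 : forall t s, P s -> P (InT t s))
  (H3 : forall t s, P s -> P (OutT t s))
  (H4 : forall c s, P c -> P s -> P (OutS c s))
  (H5 : forall c s, P c -> P s -> P (InS c s))
  (H6 : forall bs, Forall (fun p => P (snd p)) bs -> P (Ext bs))
  (H7 : forall bs, Forall (fun p => P (snd p)) bs -> P (Int bs))
  (H8 : forall x s, P s -> P (Mu x s)) (H9 : forall x, P (Var BT L x)).

Fixpoint term_ind_nested (t : term) : P t :=
  match t with
  | One => H1
  | InT b s => H2 b (term_ind_nested s)
  | OutT b s => H3 b (term_ind_nested s)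
  | OutS c s => H4 (term_ind_nested c) (term_ind_nested s)
  | InS c s => H5 (term_ind_nested c) (term_ind_nested s)
  | Ext bs => H6 ((fix F (l : list (L * term)) : Forall (fun p => P (snd p)) l :=
       match l with nil => Forall_nil _ | cons p l' => Forall_cons p (term_ind_nested (snd p)) (F l') end) bs)
  | Int bs => H7 ((fix F (l : list (L * term)) : Forall (fun p => P (snd p)) l :=
       match l with nil => Forall_nil _ | cons p l' => Forall_cons p (term_ind_nested (snd p)) (F l') end) bs)
  | Mu x s => H8 x (term_ind_nested s)
  | Var _ _ x => H9 x
  end.

End TermInd.

Lemma unguarded_free x (s : term) : unguarded x s -> free x s.
Proof. induction 1; constructor; auto. Qed.

Lemma free_subst_inv z x (t s : term) : free z (subst x t s) -> (free z s /\ z <> x) \/ free z t.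
Proof.
  induction s using term_ind_nested; simpl; intros Hf; try (inversion Hf; subst; fail).
  - inversion Hf; subst. destruct (IHs ltac:(assumption)); [left; intuition; constructor; auto | auto].
  - inversion Hf; subst. destruct (IHs ltac:(assumption)); [left; intuition; constructor; auto | auto].
  - inversion Hf; subst.
    + destruct (IHs1 ltac:(assumption)); [left; intuition; constructor; auto | auto].
    + destruct (IHs2 ltac:(assumption)); [left; intuition; apply F_OutS2; auto | auto].
  - inversion Hf; subst.
    + destruct (IHs1 ltac:(assumption)); [left; intuition; constructor; auto | auto].
    + destruct (IHs2 ltac:(assumption)); [left; intuition; apply F_InS2; auto | auto].
  - inversion Hf; subst. match goal with Hi: In _ (map _ _) |- _ => apply in_map_iff in Hi; destruct Hi as [[l' s'] [E Hin]] end.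
    simpl in E. injection E; intros; subst.
    rewrite Forall_forall in H. destruct (H _ Hin ltac:(assumption)) as [[? ?]|?]; auto.
    left; split; auto. eapply F_Ext; eauto.
  - inversion Hf; subst. match goal with Hi: In _ (map _ _) |- _ => apply in_map_iff in Hi; destruct Hi as [[l' s'] [E Hin]] end.
    simpl in E. injection E; intros; subst.
    rewrite Forall_forall in H. destruct (H _ Hin ltac:(assumption)) as [[? ?]|?]; auto.
    left; split; auto. eapply F_Int; eauto.
  - destruct (Nat.eqb_spec x x0).
    + subst. inversion Hf; subst. left; split; [constructor; auto | auto].
    + inversion Hf; subst. destruct (IHs ltac:(assumption)) as [[? ?]|?]; auto.
      left; split; [constructor; auto|auto].
  - destruct (Nat.eqb_spec x x0); auto.
    inversion Hf; subst. left; split; [constructor|auto].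
Qed.

Lemma unguarded_subst_inv y x (t s : term) : unguarded y (subst x t s) -> unguarded y s \/ free y t.
Proof.
  induction s using term_ind_nested; simpl; intros Hf; try (inversion Hf; fail).
  - destruct (Nat.eqb_spec x x0); auto.
    inversion Hf; subst. destruct (IHs ltac:(assumption)); auto. left; constructor; auto.
  - destruct (Nat.eqb_spec x x0); auto. right; apply unguarded_free; auto.
Qed.

Lemma wfg_subst x (t s : term) : wfg s -> wfg t -> closed t -> wfg (subst x t s).
Proof.
  intros Hs Ht Hc. induction s using term_ind_nested; simpl; inversion Hs; subst.
  - constructor.
  - constructor; auto.
  - constructor; auto.
  - constructor; auto.
  - constructor; auto.
  - constructor.
    + intro E. apply map_eq_nil in E; auto.
    + rewrite map_map; simpl. assumption.
    + rewrite Forall_forall in *. intros [l' s'] Hin. apply in_map_iff in Hin.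
      destruct Hin as [[l2 s2] [E Hin]]. injection E; intros; subst. simpl.
      apply (H _ Hin). match goal with Hw : forall y, In y bs -> wfg (snd y) |- _ => apply (Hw _ Hin) end.
  - constructor.
    + intro E. apply map_eq_nil in E; auto.
    + rewrite map_map; simpl. assumption.
    + rewrite Forall_forall in *. intros [l' s'] Hin. apply in_map_iff in Hin.
      destruct Hin as [[l2 s2] [E Hin]]. injection E; intros; subst. simpl.
      apply (H _ Hin). match goal with Hw : forall y, In y bs -> wfg (snd y) |- _ => apply (Hw _ Hin) end.
  - destruct (Nat.eqb_spec x x0); constructor; auto.
    intro U. destruct (unguarded_subst_inv _ _ _ U); auto. apply (Hc x0); auto.
  - destruct (Nat.eqb_spec x x0); [auto|constructor].
Qed.

Lemma subst_not_free x M (t : term) : ~ free x t -> subst x M t = t.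
Proof.
  induction t using term_ind_nested; simpl; intros Hn; try reflexivity.
  - f_equal. apply IHt. intro F; apply Hn; constructor; auto.
  - f_equal. apply IHt. intro F; apply Hn; constructor; auto.
  - f_equal. apply IHt1. intro F; apply Hn; constructor; auto. apply IHt2. intro F; apply Hn; apply F_OutS2; auto.
  - f_equal. apply IHt1. intro F; apply Hn; constructor; auto. apply IHt2. intro F; apply Hn; apply F_InS2; auto.
  - f_equal. rewrite <- map_id. apply map_ext_in. intros [l y] Hin. simpl. f_equal.
    rewrite Forall_forall in H. apply (H _ Hin). intro F; apply Hn. eapply F_Ext; eauto.
  - f_equal. rewrite <- map_id. apply map_ext_in. intros [l y] Hin. simpl. f_equal.
    rewrite Forall_forall in H. apply (H _ Hin). intro F; apply Hn. eapply F_Int; eauto.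
  - destruct (Nat.eqb_spec x x0); auto. f_equal. apply IHt. intro F; apply Hn; constructor; auto.
  - destruct (Nat.eqb_spec x x0); auto. subst. exfalso; apply Hn; constructor.
Qed.

Lemma subst_comm x y S M (t : term) : x <> y -> closed S -> closed M ->
  subst x S (subst y M t) = subst y M (subst x S t).
Proof.
  intros Nxy CS CM. induction t using term_ind_nested; simpl; try congruence.
  - f_equal. rewrite !map_map. apply map_ext_in. intros p Hp. simpl. f_equal.
    rewrite Forall_forall in H. apply (H _ Hp).
  - f_equal. rewrite !map_map. apply map_ext_in. intros p Hp. simpl. f_equal.
    rewrite Forall_forall in H. apply (H _ Hp).
  - destruct (Nat.eqb_spec y x0); destruct (Nat.eqb_spec x x0); subst; simpl.
    + congruence.
    + rewrite Nat.eqb_refl. destruct (Nat.eqb_spec x x0); [congruence|]. reflexivity.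
    + rewrite Nat.eqb_refl. destruct (Nat.eqb_spec y x0); [congruence|]. reflexivity.
    + destruct (Nat.eqb_spec x x0); [congruence|]. destruct (Nat.eqb_spec y x0); [congruence|].
      f_equal; auto.
  - destruct (Nat.eqb_spec y x0); destruct (Nat.eqb_spec x x0); subst; simpl.
    + congruence.
    + rewrite Nat.eqb_refl. apply subst_not_free; auto.
    + rewrite Nat.eqb_refl. symmetry; apply subst_not_free; auto.
    + destruct (Nat.eqb_spec x x0); [congruence|]. destruct (Nat.eqb_spec y x0); [congruence|]. reflexivity.
Qed.

Lemma SC_InT_inv t (s : term) : SC (InT t s) -> SC s.
Proof. intros [C W]; split. intros z F; apply (C z); constructor; auto. inversion W; auto. Qed.

Lemma SC_OutT_inv t (s : term) : SC (OutT t s) -> SC s.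
Proof. intros [C W]; split. intros z F; apply (C z); constructor; auto. inversion W; auto. Qed.

Lemma SC_OutS_payload c (s : term) : SC (OutS c s) -> SC c.
Proof. intros [C W]; split. intros z F; apply (C z); constructor; auto. inversion W; auto. Qed.

Lemma SC_OutS_inv c (s : term) : SC (OutS c s) -> SC s.
Proof. intros [C W]; split. intros z F; apply (C z); apply F_OutS2; auto. inversion W; auto. Qed.

Lemma SC_InS_payload c (s : term) : SC (InS c s) -> SC c.
Proof. intros [C W]; split. intros z F; apply (C z); constructor; auto. inversion W; auto. Qed.

Lemma SC_InS_inv c (s : term) : SC (InS c s) -> SC s.
Proof. intros [C W]; split. intros z F; apply (C z); apply F_InS2; auto. inversion W; auto. Qed.

Lemma SC_Ext_branch bs l (x : term) : SC (Ext bs) -> In (l, x) bs -> SC x.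
Proof. intros [C W] Hin; split. intros z F; apply (C z); eapply F_Ext; eauto.
  inversion W; subst. match goal with Hw: Forall _ bs |- _ => rewrite Forall_forall in Hw; apply (Hw _ Hin) end. Qed.

Lemma SC_Int_branch bs l (x : term) : SC (Int bs) -> In (l, x) bs -> SC x.
Proof. intros [C W] Hin; split. intros z F; apply (C z); eapply F_Int; eauto.
  inversion W; subst. match goal with Hw: Forall _ bs |- _ => rewrite Forall_forall in Hw; apply (Hw _ Hin) end. Qed.

Lemma SC_Int_choice bs l (x : term) : SC (Int bs) -> In (l, x) bs -> SC (Int [(l, x)]).
Proof. intros H Hin. pose proof (@SC_Int_branch bs l x H Hin) as [C1 W1]. destruct H as [C W]. split.
  - intros z F. inversion F; subst. match goal with Hi: In _ [_] |- _ => destruct Hi as [E|[]] end. injection E; intros; subst.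
    apply (C z); eapply F_Int; eauto.
  - constructor. discriminate. simpl. constructor. intros []. constructor. constructor. auto.
    constructor. Qed.

Lemma SC_unfold x (b : term) : SC (Mu x b) -> SC (subst x (Mu x b) b).
Proof. intros [C W]. split.
  - intros z F. destruct (free_subst_inv _ _ _ F) as [[F1 N]|F1]; apply (C z); auto.
    constructor; auto.
  - apply wfg_subst; auto. inversion W; auto.
Qed.

Lemma step_SC (s : term) a t : step s a t -> SC s -> SC t.
Proof.
  intros H; destruct H; intros Hs.
  - auto.
  - eapply SC_InT_inv; eauto.
  - eapply SC_OutT_inv; eauto.
  - eapply SC_OutS_inv; eauto.
  - eapply SC_InS_inv; eauto.
  - eapply SC_Int_branch; eauto. left; reflexivity.
  - eapply SC_Int_choice; eauto.
  - eapply SC_Ext_branch; eauto.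
  - apply SC_unfold; auto.
Qed.

Lemma NoDup_fst_In_inj (cs : list (L * term)) l x y :
  NoDup (map fst cs) -> In (l, x) cs -> In (l, y) cs -> x = y.
Proof.
  induction cs as [|[l0 z] cs IH]; simpl; intros N H1 H2; [contradiction|].
  inversion N; subst.
  destruct H1 as [E1|H1]; destruct H2 as [E2|H2].
  - injection E1; injection E2; intros; subst; auto.
  - injection E1; intros; subst. exfalso; apply H3. apply (in_map fst) in H2; auto.
  - injection E2; intros; subst. exfalso; apply H3. apply (in_map fst) in H1; auto.
  - eauto.
Qed.

Lemma SC_Ext_NoDup (bs : list (L * term)) : SC (Ext bs) -> NoDup (map fst bs).
Proof. intros [_ W]; inversion W; auto. Qed.

Lemma SC_Int_NoDup (bs : list (L * term)) : SC (Int bs) -> NoDup (map fst bs).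
Proof. intros [_ W]; inversion W; auto. Qed.

Lemma SC_closed (s : term) : SC s -> closed s.
Proof. intros [C _]; exact C. Qed.

Lemma SC_not_Var x : ~ SC (Var BT L x).
Proof. intros [C _]. apply (C x). constructor. Qed.

Lemma SC_One : SC (One : term).
Proof. split. intros z F; inversion F. constructor. Qed.

Lemma SC_InT t (s : term) : SC s -> SC (InT t s).
Proof. intros [C W]; split. intros z F; inversion F; subst; eapply C; eauto. constructor; auto. Qed.

Lemma SC_OutT t (s : term) : SC s -> SC (OutT t s).
Proof. intros [C W]; split. intros z F; inversion F; subst; eapply C; eauto. constructor; auto. Qed.

Lemma SC_OutS (c s : term) : SC c -> SC s -> SC (OutS c s).
Proof. intros [C1 W1] [C W]; split. intros z F; inversion F; subst; [eapply C1|eapply C]; eauto. constructor; auto. Qed.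

Lemma SC_InS (c s : term) : SC c -> SC s -> SC (InS c s).
Proof. intros [C1 W1] [C W]; split. intros z F; inversion F; subst; [eapply C1|eapply C]; eauto. constructor; auto. Qed.

Lemma SC_Ext (bs : list (L * term)) : bs <> [] -> NoDup (map fst bs) -> (forall p, In p bs -> SC (snd p)) -> SC (Ext bs).
Proof. intros N D H; split.
  - intros z F; inversion F; subst. match goal with Hi : In _ bs |- _ => destruct (H _ Hi) as [C _] end. eapply C; eauto.
  - constructor; auto. rewrite Forall_forall; intros p Hp; apply H; auto. Qed.

Lemma SC_Int (bs : list (L * term)) : bs <> [] -> NoDup (map fst bs) -> (forall p, In p bs -> SC (snd p)) -> SC (Int bs).
Proof. intros N D H; split.
  - intros z F; inversion F; subst. match goal with Hi : In _ bs |- _ => destruct (H _ Hi) as [C _] end. eapply C; eauto.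
  - constructor; auto. rewrite Forall_forall; intros p Hp; apply H; auto. Qed.

Lemma SC_Ext_nonempty (bs : list (L * term)) : SC (Ext bs) -> bs <> [].
Proof. intros [_ W]; inversion W; auto. Qed.

Lemma SC_Int_nonempty (bs : list (L * term)) : SC (Int bs) -> bs <> [].
Proof. intros [_ W]; inversion W; auto. Qed.

(** * Unfolding and internal reduction *)

Inductive unfolds : term -> term -> Prop :=
| Unf_refl s : unfolds s s
| Unf_step x b d : unfolds (subst x (Mu x b) b) d -> unfolds (Mu x b) d.

Definition not_Mu (t : term) : Prop := match t with Mu _ _ => False | _ => True end.

Lemma unfolds_not_Mu s d : unfolds s d -> not_Mu s -> d = s.
Proof. intros H; destruct H; simpl; tauto. Qed.

Lemma unfolds_det s d1 d2 : unfolds s d1 -> unfolds s d2 -> not_Mu d1 -> not_Mu d2 -> d1 = d2.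
Proof.
  intros H; revert d2; induction H; intros d2 H2 N1 N2.
  - symmetry; apply unfolds_not_Mu; auto.
  - inversion H2; subst. simpl in N2; contradiction. auto.
Qed.

Lemma unfolds_SC s d : unfolds s d -> SC s -> SC d.
Proof. induction 1; auto. intros; apply IHunfolds; apply SC_unfold; auto. Qed.

Lemma unfolds_trans a b c : unfolds a b -> unfolds b c -> unfolds a c.
Proof. induction 1; auto. intros; constructor; auto. Qed.

Lemma unfolds_related_eq c d : (unfolds c d \/ unfolds d c) -> not_Mu c -> not_Mu d -> c = d.
Proof. intros [H|H] N1 N2. symmetry; apply unfolds_not_Mu; auto. apply unfolds_not_Mu; auto. Qed.

Lemma unfolds_related_unfold c d x b : (unfolds c d \/ unfolds d c) -> c = Mu x b ->
  (unfolds (subst x (Mu x b) b) d \/ unfolds d (subst x (Mu x b) b)).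
Proof.
  intros [H|H] E; subst.
  - inversion H; subst. right. constructor. constructor. auto.
  - right. eapply unfolds_trans; eauto. constructor. constructor.
Qed.

Inductive taus : term -> term -> Prop :=
| Taus_refl s : taus s s
| Taus_step s s1 s2 : step s ATau s1 -> taus s1 s2 -> taus s s2.

Lemma taus_SC s d : taus s d -> SC s -> SC d.
Proof. induction 1; auto. intros; apply IHtaus; eapply step_SC; eauto. Qed.

Lemma unfolds_taus s d : unfolds s d -> taus s d.
Proof. induction 1. constructor. econstructor; eauto. constructor. Qed.

Lemma taus_trans a b c : taus a b -> taus b c -> taus a c.
Proof. induction 1; auto. intros; econstructor; eauto. Qed.

Lemma taus_snoc s s' s'' : taus s s' -> step s' ATau s'' -> taus s s''.
Proof. intros T H. eapply taus_trans; eauto. econstructor; eauto. constructor. Qed.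

Lemma Int_single_no_tau l (x : term) y : ~ step (Int [(l, x)]) ATau y.
Proof. intros H; inversion H; subst. simpl in *. lia. Qed.

Local Notation reach_choice u v :=
  (v = u \/ exists (bs : list (L * term)) (l : L) (x : term), u = Int bs /\ In (l, x) bs /\ v = Int [(l, x)]).

Lemma reach_choice_not_Int u v : reach_choice u v -> (forall bs, u <> Int bs) -> v = u.
Proof. intros [E|[bs [l [x [E1 _]]]]] Hn; auto. exfalso; eapply Hn; eauto. Qed.

Lemma reach_choice_Mu u v x b : reach_choice u v -> v = Mu x b -> v = u.
Proof. intros [E|[bs [l [y [E1 [_ E2]]]]]] E3; auto. subst. discriminate. Qed.

Lemma reach_choice_Int_step (u : term) bs a1 a' : reach_choice (Int bs) u -> step u a1 a' -> a1 <> ATau ->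
  exists l1, a1 = AOutL BT l1 /\ In (l1, a') bs.
Proof.
  intros [E|[bs0 [l0 [y [E1 [Hi E2]]]]]] Hs Hn; subst.
  - inversion Hs; subst. exists l. split; auto. left; auto. congruence.
  - injection E1; intros; subst. inversion Hs; subst. exists l0; auto. congruence.
Qed.

Lemma taus_unfolds s s' : taus s s' -> not_Mu s' ->
  exists t, unfolds s t /\ not_Mu t /\ reach_choice t s'.
Proof.
  induction 1; intros N.
  - exists s; repeat split; auto. constructor.
  - inversion H; subst.
    + inversion H0; subst.
      * exists (Int bs); split; [constructor|split; [exact I| right; eauto 6]].
      * exfalso; eapply Int_single_no_tau; eauto.
    + destruct (IHtaus N) as [t [U [N2 E]]]. exists t; split; [constructor; auto|auto].
Qed.

(* The non-[Mu] term reached by unfolding [s], if any.  This and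
   [lookup_label] are defined classically: labels have no decidable equality. *)
Definition unfold_nf (s : term) : option term :=
  match excluded_middle_informative (exists t, unfolds s t /\ not_Mu t) with
  | left H => Some (proj1_sig (constructive_indefinite_description _ H))
  | right _ => None
  end.

Lemma unfold_nf_spec s t : unfold_nf s = Some t -> unfolds s t /\ not_Mu t.
Proof. unfold unfold_nf. destruct excluded_middle_informative; [|discriminate].
  destruct constructive_indefinite_description; simpl; intros E; injection E; intros; subst; auto. Qed.

Lemma unfold_nf_eq s t : unfolds s t -> not_Mu t -> unfold_nf s = Some t.
Proof. intros U N. unfold unfold_nf. destruct excluded_middle_informative as [H|H].
  - destruct constructive_indefinite_description as [t' [U' N']]; simpl.
    f_equal. eapply unfolds_det; eauto.
  - exfalso; apply H; eauto. Qed.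

Lemma unfold_nf_SC s t : unfold_nf s = Some t -> SC s -> SC t.
Proof. intros E H. destruct (unfold_nf_spec _ E) as [U _]. eapply unfolds_SC; eauto. Qed.

Lemma taus_unfold_nf s s' : taus s s' -> not_Mu s' ->
  exists t, unfold_nf s = Some t /\ reach_choice t s'.
Proof. intros T N. destruct (taus_unfolds T N) as [t [U [Nt E]]]. exists t; split; auto. apply unfold_nf_eq; auto. Qed.

Lemma taus_unfold_nf_eq s s' : taus s s' -> not_Mu s' -> (forall bs, s' <> Int bs) -> unfold_nf s = Some s'.
Proof. intros T N Hn. destruct (taus_unfold_nf T N) as [t [E [E2|[bs [l [x [_ [_ E3]]]]]]]]; subst; auto.
  exfalso; eapply Hn; eauto. Qed.

Lemma taus_unfold_nf_choice s l (x : term) : taus s (Int [(l, x)]) ->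
  exists cs, unfold_nf s = Some (Int cs) /\ In (l, x) cs.
Proof. intros T. destruct (taus_unfold_nf T I) as [t [E [E2|[bs [l' [x' [E3 [Hi E4]]]]]]]].
  - subst. exists [(l, x)]; split; auto. left; auto.
  - subst. injection E4; intros; subst. eauto. Qed.

Definition lookup_label (l : L) (cs : list (L * term)) : option term :=
  match excluded_middle_informative (exists x, In (l, x) cs) with
  | left H => Some (proj1_sig (constructive_indefinite_description _ H))
  | right _ => None
  end.

Lemma lookup_label_In l cs x : lookup_label l cs = Some x -> In (l, x) cs.
Proof. unfold lookup_label. destruct excluded_middle_informative; [|discriminate].
  destruct constructive_indefinite_description; simpl; intros E; injection E; intros; subst; auto. Qed.

Lemma lookup_label_eq l cs x : NoDup (map fst cs) -> In (l, x) cs -> lookup_label l cs = Some x.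
Proof. intros N Hin. unfold lookup_label. destruct excluded_middle_informative as [H|H].
  - destruct constructive_indefinite_description as [y Hy]; simpl. f_equal. eapply NoDup_fst_In_inj; eauto.
  - exfalso; eauto. Qed.

(** * Basic facts about compliance *)

Lemma matches_ATau_l : forall B0 (a : action BT L), matches leb B0 ATau a -> False.
Proof. simpl; auto. Qed.

Lemma matches_ATau_r : forall B0 (a : action BT L), matches leb B0 a ATau -> False.
Proof. intros B0 a; destruct a; simpl; auto. Qed.

Lemma matches_ACheck_l : forall B0 (a : action BT L), matches leb B0 ACheck a -> False.
Proof. simpl; auto. Qed.

Lemma matches_ACheck_r : forall B0 (a : action BT L), matches leb B0 a ACheck -> False.
Proof. intros B0 a; destruct a; simpl; auto. Qed.

Ltac nomatch := exfalso; match goal with H : matches _ _ _ _ |- _ =>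
  first [ exact (@matches_ATau_l _ _ H) | exact (@matches_ATau_r _ _ H) | exact (@matches_ACheck_l _ _ H) | exact (@matches_ACheck_r _ _ H) ] end.

Lemma complies_stuck B0 (a b : term) : complies leb B0 a b ->
  (forall a' b', ~ sys_tau leb B0 a b a' b') -> can_check a /\ can_check b.
Proof. intros [R [HR H]] Hs. exact (proj1 (HR _ _ H) Hs). Qed.

Lemma complies_step B0 (a b a' b' : term) : complies leb B0 a b -> sys_tau leb B0 a b a' b' -> complies leb B0 a' b'.
Proof. intros [R [HR H]] Hs. exists R; split; auto. exact (proj2 (HR _ _ H) _ _ Hs). Qed.

Lemma complies_taus B0 (r s s' : term) : complies leb B0 r s -> taus s s' -> complies leb B0 r s'.
Proof. intros C T; revert C; induction T; auto. intros C. apply IHT. eapply complies_step; eauto. apply Sys_R; auto. Qed.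

Lemma can_check_One (r : term) : can_check r -> r = One.
Proof. intros [r' H]; inversion H; auto. Qed.

Lemma complies_unfold_nf B0 (r s t : term) : complies leb B0 r s -> unfold_nf s = Some t -> complies leb B0 r t.
Proof. intros C E. destruct (unfold_nf_spec _ E) as [U _]. eapply complies_taus; eauto. apply unfolds_taus; auto. Qed.

Definition only_step (u : term) a v : Prop := forall a' v', step u a' v' -> a' = a /\ v' = v.

Lemma complies_sync B0 (r t : term) a1 r1 a2 t1 : complies leb B0 r t -> only_step r a1 r1 -> only_step t a2 t1 ->
  a1 <> ATau -> a2 <> ATau -> ~ can_check r -> matches leb B0 a1 a2.
Proof.
  intros C U1 U2 N1 N2 Nc. apply NNPP; intro Nm. apply Nc. apply (complies_stuck C).
  intros a' b' H; inversion H; subst.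
  - destruct (U1 _ _ H0); congruence.
  - destruct (U2 _ _ H0); congruence.
  - destruct (U1 _ _ H0); destruct (U2 _ _ H1); subst; auto.
Qed.

Lemma only_step_InT t (s : term) : only_step (InT t s) (AInT L t) s.
Proof. intros a v H; inversion H; auto. Qed.

Lemma only_step_OutT t (s : term) : only_step (OutT t s) (AOutT L t) s.
Proof. intros a v H; inversion H; auto. Qed.

Lemma only_step_InS (c s : term) : only_step (InS c s) (AInS c) s.
Proof. intros a v H; inversion H; auto. Qed.

Lemma only_step_OutS (c s : term) : only_step (OutS c s) (AOutS c) s.
Proof. intros a v H; inversion H; auto. Qed.

Lemma InT_no_check t (s : term) : ~ can_check (InT t s).
Proof. intros H; apply can_check_One in H; discriminate. Qed.

Lemma OutT_no_check t (s : term) : ~ can_check (OutT t s).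
Proof. intros H; apply can_check_One in H; discriminate. Qed.

Lemma InS_no_check (c s : term) : ~ can_check (InS c s).
Proof. intros H; apply can_check_One in H; discriminate. Qed.

Lemma OutS_no_check (c s : term) : ~ can_check (OutS c s).
Proof. intros H; apply can_check_One in H; discriminate. Qed.

(* A payload exchange refused by [B0] would leave the compliant pair stuck. *)
Lemma complies_sys_tau_reflect B0 B1 (r t r1 t1 : term) :
  complies leb B0 r t -> sys_tau leb B1 r t r1 t1 -> sys_tau leb B0 r t r1 t1.
Proof.
  intros C H. inversion H as [| |? ? ? ? a1 a2 Hx1 Hx2 Hm]; subst; [apply Sys_L|apply Sys_R|]; auto.
  eapply Sys_Sync; eauto.
  destruct a1, a2; try exact Hm; inversion Hx1; subst; inversion Hx2; subst.
  - eapply complies_sync; [exact C|apply only_step_OutS|apply only_step_InS|discriminate|discriminate|apply OutS_no_check].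
  - eapply complies_sync; [exact C|apply only_step_InS|apply only_step_OutS|discriminate|discriminate|apply InS_no_check].
Qed.

Lemma complies_Int_choice B0 (r : term) cs l x : complies leb B0 r (Int cs) -> In (l, x) cs -> complies leb B0 r (Int [(l, x)]).
Proof.
  intros C Hi. destruct cs as [|p [|q cs']].
  - destruct Hi.
  - destruct Hi as [E|[]]; subst; auto.
  - eapply complies_step; [exact C|]. apply Sys_R. apply St_IntTau; auto. simpl; lia.
Qed.

Inductive bad_run (B0 : term -> term -> Prop) : nat -> term -> term -> Prop :=
| Bad_stuck a b : (forall a' b', ~ sys_tau leb B0 a b a' b') -> ~ (can_check a /\ can_check b) -> bad_run B0 0 a b
| Bad_step n a b a' b' : sys_tau leb B0 a b a' b' -> bad_run B0 n a' b' -> bad_run B0 (S n) a b.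

Lemma not_complies_bad_run B0 (a b : term) : ~ complies leb B0 a b -> exists n, bad_run B0 n a b.
Proof.
  intros H. apply NNPP; intro Hn. apply H.
  exists (fun x y => ~ exists n, bad_run B0 n x y). split.
  - intros x y Hxy. split.
    + intros Hst. apply NNPP; intro Nc. apply Hxy. exists 0. constructor; auto.
    + intros x' y' Hs Hb. apply Hxy. destruct Hb as [n Hb]. exists (S n). econstructor; eauto.
  - intros [n Hb]. apply Hn. eauto.
Qed.

(** * The dual contract *)

Definition close_env (e : list (nat * term)) (t : term) : term :=
  fold_right (fun p acc => subst (fst p) (snd p) acc) t e.

Definition env_closed (e : list (nat * term)) := Forall (fun p => closed (snd p)) e.

Definition env_covers (e : list (nat * term)) (t : term) := forall z, free z t -> In z (map fst e).

Lemma free_close_env e (t : term) z : env_closed e -> free z (close_env e t) -> free z t /\ ~ In z (map fst e).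
Proof.
  induction e as [|[y M] e IH]; simpl; intros H F; auto.
  inversion H; subst. destruct (free_subst_inv _ _ _ F) as [[F1 N]|F1].
  - destruct (IH H3 F1). split; auto. intros [E|I]; auto.
  - exfalso; apply (H2 z); auto.
Qed.

Lemma close_env_closed e (t : term) : closed t -> close_env e t = t.
Proof. induction e as [|[y M] e IH]; simpl; intros C; auto. rewrite IH; auto. apply subst_not_free; auto. Qed.

Lemma close_env_app e1 e2 (t : term) : close_env (e1 ++ e2) t = close_env e1 (close_env e2 t).
Proof. unfold close_env. apply fold_right_app. Qed.

Lemma subst_close_env x S e (t : term) : ~ In x (map fst e) -> env_closed e -> closed S ->
  subst x S (close_env e t) = close_env e (subst x S t).
Proof.
  induction e as [|[y M] e IH]; simpl; intros Hn He CS; auto.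
  inversion He; subst. rewrite subst_comm; auto. f_equal. apply IH; auto.
Qed.

Lemma close_env_covers e (t : term) : env_closed e -> env_covers e t -> closed (close_env e t).
Proof. intros H F z Fz. destruct (@free_close_env e t z H Fz) as [F1 N]. apply N; apply F; auto. Qed.

(* Payloads are not dualised; their free variables refer to the recursions of
   the original contract, so they are closed by the environment [e] recording
   the enclosing recursions of [s] (the last entry is substituted first). *)
Fixpoint dualE (e : list (nat * term)) (s : term) : term :=
  match s with
  | One => One
  | InT t s => OutT t (dualE e s)
  | OutT t s => InT t (dualE e s)
  | OutS c s => InS (close_env e c) (dualE e s)
  | InS c s => OutS (close_env e c) (dualE e s)
  | Ext bs => Int (map (fun p => (fst p, dualE e (snd p))) bs)
  | Int bs => Ext (map (fun p => (fst p, dualE e (snd p))) bs)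
  | Mu x s => Mu x (dualE (e ++ [(x, close_env e (Mu x s))]) s)
  | Var _ _ x => Var BT L x
  end.

Definition dual (s : term) := dualE [] s.

Lemma covers_InT e t (s : term) : env_covers e (InT t s) -> env_covers e s.
Proof. intros F z Fz; apply F; constructor; auto. Qed.

Lemma covers_OutT e t (s : term) : env_covers e (OutT t s) -> env_covers e s.
Proof. intros F z Fz; apply F; constructor; auto. Qed.

Lemma covers_OutS_payload e c (s : term) : env_covers e (OutS c s) -> env_covers e c.
Proof. intros F z Fz; apply F; constructor; auto. Qed.

Lemma covers_OutS e c (s : term) : env_covers e (OutS c s) -> env_covers e s.
Proof. intros F z Fz; apply F; apply F_OutS2; auto. Qed.

Lemma covers_InS_payload e c (s : term) : env_covers e (InS c s) -> env_covers e c.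
Proof. intros F z Fz; apply F; constructor; auto. Qed.

Lemma covers_InS e c (s : term) : env_covers e (InS c s) -> env_covers e s.
Proof. intros F z Fz; apply F; apply F_InS2; auto. Qed.

Lemma covers_Ext e bs l (s : term) : env_covers e (Ext bs) -> In (l, s) bs -> env_covers e s.
Proof. intros F Hi z Fz; apply F; eapply F_Ext; eauto. Qed.

Lemma covers_Int e bs l (s : term) : env_covers e (Int bs) -> In (l, s) bs -> env_covers e s.
Proof. intros F Hi z Fz; apply F; eapply F_Int; eauto. Qed.

Lemma covers_Mu e x (s : term) : env_covers e (Mu x s) -> env_covers (e ++ [(x, close_env e (Mu x s))]) s.
Proof. intros F z Fz. rewrite map_app. simpl. apply in_or_app.
  destruct (Nat.eq_dec z x). right; left; auto. left; apply F; constructor; auto. Qed.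

Lemma env_closed_Mu e x (s : term) : env_closed e -> env_covers e (Mu x s) -> env_closed (e ++ [(x, close_env e (Mu x s))]).
Proof. intros H F. unfold env_closed. apply Forall_app; split; auto. constructor; [|constructor].
  apply close_env_covers; auto. Qed.

Lemma env_closed_cons x (S : term) e : closed S -> env_closed e -> env_closed ((x, S) :: e).
Proof. intros; constructor; auto. Qed.

Lemma dualE_cons_bound x S (b : term) : forall e, In x (map fst e) -> env_closed e -> closed S -> env_covers e b ->
  dualE ((x, S) :: e) b = dualE e b.
Proof.
  induction b using term_ind_nested; intros e Hx He CS Hf; simpl.
  - reflexivity.
  - f_equal; apply IHb; auto. eapply covers_InT; eauto.
  - f_equal; apply IHb; auto. eapply covers_OutT; eauto.
  - f_equal. apply subst_not_free. intro F. destruct (@free_close_env _ _ _ He F); auto.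
    apply IHb2; auto. eapply covers_OutS; eauto.
  - f_equal. apply subst_not_free. intro F. destruct (@free_close_env _ _ _ He F); auto.
    apply IHb2; auto. eapply covers_InS; eauto.
  - f_equal. apply map_ext_in. intros [l y] Hin. simpl. f_equal.
    rewrite Forall_forall in H. apply (H _ Hin); auto. eapply covers_Ext; eauto.
  - f_equal. apply map_ext_in. intros [l y] Hin. simpl. f_equal.
    rewrite Forall_forall in H. apply (H _ Hin); auto. eapply covers_Int; eauto.
  - f_equal. rewrite (subst_not_free _ (t := close_env e (Mu x0 b))).
    + apply IHb. rewrite map_app; apply in_or_app; auto. apply env_closed_Mu; auto. auto. apply covers_Mu; auto.
    + intro F. destruct (@free_close_env _ _ _ He F); auto.
  - reflexivity.
Qed.

Lemma dualE_app_closed e (b : term) : forall e2, env_closed e -> env_closed e2 -> env_covers e2 b -> dualE (e ++ e2) b = dualE e2 b.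
Proof.
  induction b using term_ind_nested; intros e2 He He2 Hf; simpl.
  - reflexivity.
  - f_equal; apply IHb; auto. eapply covers_InT; eauto.
  - f_equal; apply IHb; auto. eapply covers_OutT; eauto.
  - f_equal. rewrite close_env_app. apply close_env_closed. apply close_env_covers; auto. eapply covers_OutS_payload; eauto.
    apply IHb2; auto. eapply covers_OutS; eauto.
  - f_equal. rewrite close_env_app. apply close_env_closed. apply close_env_covers; auto. eapply covers_InS_payload; eauto.
    apply IHb2; auto. eapply covers_InS; eauto.
  - f_equal. apply map_ext_in. intros [l y] Hin. simpl. f_equal.
    rewrite Forall_forall in H. apply (H _ Hin); auto. eapply covers_Ext; eauto.
  - f_equal. apply map_ext_in. intros [l y] Hin. simpl. f_equal.
    rewrite Forall_forall in H. apply (H _ Hin); auto. eapply covers_Int; eauto.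
  - f_equal. rewrite close_env_app. rewrite (close_env_closed _ (t := close_env e2 (Mu x b))).
    + rewrite <- app_assoc. apply IHb; auto. apply env_closed_Mu; auto. apply covers_Mu; auto.
    + apply close_env_covers; auto.
  - reflexivity.
Qed.

Lemma dualE_closed e (S : term) : env_closed e -> closed S -> dualE e S = dual S.
Proof. intros He CS. unfold dual. rewrite <- (app_nil_r e). apply dualE_app_closed; auto.
  all: try (intros z F; exfalso; apply (CS z); auto). constructor. Qed.

Lemma subst_dualE x S (b : term) : forall e, ~ In x (map fst e) -> env_closed e -> closed S -> env_covers ((x, S) :: e) b ->
  subst x (dual S) (dualE ((x, S) :: e) b) = dualE e (subst x S b).
Proof.
  induction b using term_ind_nested; intros e Hx He CS Hf; simpl.
  - reflexivity.
  - f_equal; apply IHb; auto. eapply covers_InT; eauto.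
  - f_equal; apply IHb; auto. eapply covers_OutT; eauto.
  - f_equal.
    + rewrite subst_not_free. apply subst_close_env; auto.
      apply (close_env_covers (e := (x, S) :: e)). apply env_closed_cons; auto. eapply covers_OutS_payload; eauto.
    + apply IHb2; auto. eapply covers_OutS; eauto.
  - f_equal.
    + rewrite subst_not_free. apply subst_close_env; auto.
      apply (close_env_covers (e := (x, S) :: e)). apply env_closed_cons; auto. eapply covers_InS_payload; eauto.
    + apply IHb2; auto. eapply covers_InS; eauto.
  - f_equal. rewrite !map_map. apply map_ext_in. intros [l y] Hin. simpl. f_equal.
    rewrite Forall_forall in H. apply (H _ Hin); auto. eapply covers_Ext; eauto.
  - f_equal. rewrite !map_map. apply map_ext_in. intros [l y] Hin. simpl. f_equal.
    rewrite Forall_forall in H. apply (H _ Hin); auto. eapply covers_Int; eauto.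
  - destruct (Nat.eqb_spec x x0).
    + subst.
      assert (FVe : env_covers e (Mu x0 b)).
      { intros z Fz. destruct (Hf z Fz) as [E|I]; auto. simpl in E. subst.
        inversion Fz; subst. congruence. }
      simpl. f_equal.
      rewrite (subst_not_free _ (t := close_env e (Mu x0 b))).
      * apply dualE_cons_bound. rewrite map_app; apply in_or_app; right; left; auto.
        apply env_closed_Mu; auto. auto. apply covers_Mu; auto.
      * intro F. destruct (@free_close_env _ _ _ He F) as [F1 _]. inversion F1; subst; congruence.
    + simpl. f_equal.
      assert (EX : subst x S (close_env e (Mu x0 b)) = close_env e (Mu x0 (subst x S b))).
      { rewrite subst_close_env; auto. simpl. destruct (Nat.eqb_spec x x0); [congruence|]. reflexivity. }
      rewrite EX. rewrite <- EX.
      change (subst x S (close_env e (Mu x0 b))) with (close_env ((x, S) :: e) (Mu x0 b)).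
      replace (dualE (e ++ [(x0, close_env e (Mu x0 (subst x S b)))]) (subst x S b))
        with (dualE (e ++ [(x0, close_env ((x, S) :: e) (Mu x0 b))]) (subst x S b))
        by (simpl; rewrite EX; reflexivity).
      apply IHb.
      * rewrite map_app. simpl. intro I. apply in_app_or in I. destruct I as [I|[I|[]]]; auto.
      * unfold env_closed. apply Forall_app; split; auto. constructor; [|constructor]. simpl.
        apply (close_env_covers (e := (x, S) :: e)). apply env_closed_cons; auto. auto.
      * auto.
      * intros z Fz. simpl. rewrite map_app. simpl.
        destruct (Nat.eq_dec z x0). { right. apply in_or_app. right; left; auto. }
        assert (Fm : free z (Mu x0 b)) by (constructor; auto).
        destruct (Hf z Fm) as [E|I]; auto. right; apply in_or_app; left; auto.
  - destruct (Nat.eqb_spec x x0).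
    + subst. simpl. symmetry; apply dualE_closed; auto.
    + reflexivity.
Qed.

Lemma dual_unfold x (b : term) : closed (Mu x b) ->
  subst x (dual (Mu x b)) (dualE [(x, Mu x b)] b) = dual (subst x (Mu x b) b).
Proof.
  intros C. unfold dual at 2. rewrite <- (subst_dualE (e := [])); auto.
  - constructor.
  - intros z Fz. destruct (Nat.eq_dec z x). left; auto. exfalso; apply (C z); constructor; auto.
Qed.

Definition env_wfg (e : list (nat * term)) := Forall (fun p => wfg (snd p)) e.

Lemma wfg_close_env e (t : term) : env_closed e -> env_wfg e -> wfg t -> wfg (close_env e t).
Proof. induction e as [|[y M] e IH]; simpl; intros H1 H2 W; auto.
  inversion H1; inversion H2; subst. apply wfg_subst; auto. Qed.

Lemma free_dualE z (b : term) : forall e, env_closed e -> env_covers e b -> free z (dualE e b) -> free z b.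
Proof.
  induction b using term_ind_nested; intros e He Hf F; simpl in F; inversion F; subst.
  - constructor. eapply IHb; eauto. eapply covers_InT; eauto.
  - constructor. eapply IHb; eauto. eapply covers_OutT; eauto.
  - constructor. eapply (@free_close_env e _ _ He); eauto.
  - apply F_OutS2. eapply IHb2; eauto. eapply covers_OutS; eauto.
  - constructor. eapply (@free_close_env e _ _ He); eauto.
  - apply F_InS2. eapply IHb2; eauto. eapply covers_InS; eauto.
  - match goal with Hi : In _ (map _ _) |- _ => apply in_map_iff in Hi; destruct Hi as [[l' y] [E Hin]] end.
    simpl in E; injection E; intros; subst.
    rewrite Forall_forall in H. eapply F_Ext; eauto. eapply (H _ Hin); eauto. eapply covers_Ext; eauto.
  - match goal with Hi : In _ (map _ _) |- _ => apply in_map_iff in Hi; destruct Hi as [[l' y] [E Hin]] end.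
    simpl in E; injection E; intros; subst.
    rewrite Forall_forall in H. eapply F_Int; eauto. eapply (H _ Hin); eauto. eapply covers_Int; eauto.
  - constructor; auto. apply (IHb (e ++ [(x, close_env e (Mu x b))])); auto. apply env_closed_Mu; auto. apply covers_Mu; auto.
  - constructor.
Qed.

Lemma unguarded_dualE z (b : term) : forall e, unguarded z (dualE e b) -> unguarded z b.
Proof. induction b using term_ind_nested; intros e U; simpl in U; inversion U; subst; constructor; eauto. Qed.

Lemma wfg_dualE (b : term) : forall e, env_closed e -> env_wfg e -> env_covers e b -> wfg b -> wfg (dualE e b).
Proof.
  induction b using term_ind_nested; intros e He Hw Hf W; simpl; inversion W; subst.
  - constructor.
  - constructor. apply IHb; auto. eapply covers_InT; eauto.
  - constructor. apply IHb; auto. eapply covers_OutT; eauto.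
  - constructor. apply wfg_close_env; auto. apply IHb2; auto. eapply covers_OutS; eauto.
  - constructor. apply wfg_close_env; auto. apply IHb2; auto. eapply covers_InS; eauto.
  - constructor.
    + intro E. apply map_eq_nil in E; auto.
    + rewrite map_map; simpl. assumption.
    + rewrite Forall_forall in *. intros [l' s'] Hin. apply in_map_iff in Hin.
      destruct Hin as [[l2 s2] [E Hin]]. injection E; intros; subst. simpl.
      apply (H _ Hin); auto. eapply covers_Ext; eauto.
  - constructor.
    + intro E. apply map_eq_nil in E; auto.
    + rewrite map_map; simpl. assumption.
    + rewrite Forall_forall in *. intros [l' s'] Hin. apply in_map_iff in Hin.
      destruct Hin as [[l2 s2] [E Hin]]. injection E; intros; subst. simpl.
      apply (H _ Hin); auto. eapply covers_Int; eauto.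
  - constructor.
    + intro U. apply unguarded_dualE in U. auto.
    + apply IHb; auto. apply env_closed_Mu; auto.
      unfold env_wfg. apply Forall_app; split; auto. constructor; [|constructor]. simpl. apply wfg_close_env; auto.
      apply covers_Mu; auto.
  - constructor.
Qed.

Lemma SC_dual (s : term) : SC s -> SC (dual s).
Proof.
  intros [C W]. assert (env_covers [] s) by (intros z F; exfalso; apply (C z F)).
  split.
  - intros z F. apply (C z). eapply free_dualE; eauto. constructor.
  - apply wfg_dualE; auto; constructor.
Qed.

Lemma In_map_dual_inv l y (bs : list (L * term)) :
  In (l, y) (map (fun p => (fst p, dualE [] (snd p))) bs) -> exists x, In (l, x) bs /\ y = dual x.
Proof. intros H. apply in_map_iff in H. destruct H as [[l' x] [E H]]. simpl in E.
  injection E; intros; subst. eauto. Qed.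

Lemma In_map_dual l x (bs : list (L * term)) :
  In (l, x) bs -> In (l, dual x) (map (fun p => (fst p, dualE [] (snd p))) bs).
Proof. intros H. apply (in_map (fun p => (fst p, dualE [] (snd p)))) in H. exact H. Qed.

Section DualComp.
Variable B : term -> term -> Prop.
Hypothesis B_refl : forall s, SC s -> B s s.

(* Both sides unfold their recursions independently, and an internal choice
   may already have committed to a branch. *)
Definition dual_rel (a b : term) : Prop :=
  exists c d, SC c /\ SC d /\ (unfolds c d \/ unfolds d c) /\ reach_choice (dual c) a /\ reach_choice d b.

Lemma dual_rel_diag c : SC c -> dual_rel (dual c) c.
Proof. intros Sc. exists c, c. split; [auto|split; [auto|split; [left; constructor|split; left; reflexivity]]]. Qed.

Ltac no_choice H := apply reach_choice_not_Int in H; [|intros ? E; discriminate E].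

Lemma dual_rel_stuck a b : dual_rel a b -> (forall a' b', ~ sys_tau leb B a b a' b') -> can_check a /\ can_check b.
Proof.
  intros [c [d [Sc [Sd [Ucd [Aa Ab]]]]]] Hst.
  destruct (classic (not_Mu c)) as [Nc|Nc].
  2:{ exfalso. destruct c; simpl in Nc; try tauto.
      no_choice Aa. subst a. eapply Hst. apply Sys_L. apply St_Mu. }
  destruct (classic (not_Mu d)) as [Nd|Nd].
  2:{ exfalso. destruct d; simpl in Nd; try tauto.
      no_choice Ab. subst b. eapply Hst. apply Sys_R. apply St_Mu. }
  pose proof (unfolds_related_eq Ucd Nc Nd); subst d.
  destruct c; simpl in Aa.
  - no_choice Aa. no_choice Ab. subst.
    split; eexists; constructor.
  - no_choice Aa. no_choice Ab. subst.
    exfalso. eapply Hst. eapply Sys_Sync; [apply St_OutT|apply St_InT|simpl; auto].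
  - no_choice Aa. no_choice Ab. subst.
    exfalso. eapply Hst. eapply Sys_Sync; [apply St_InT|apply St_OutT|simpl; auto].
  - no_choice Aa. no_choice Ab. subst.
    exfalso. eapply Hst. eapply Sys_Sync; [apply St_InS|apply St_OutS|simpl].
    apply B_refl. eapply SC_OutS_payload; eauto.
  - no_choice Aa. no_choice Ab. subst.
    exfalso. eapply Hst. eapply Sys_Sync; [apply St_OutS|apply St_InS|simpl].
    apply B_refl. eapply SC_InS_payload; eauto.
  - no_choice Ab. subst. exfalso.
    destruct Aa as [E|[bs0 [l0 [y [E1 [Hi E2]]]]]].
    + subst. destruct l as [|[l1 x] [|q bs1]].
      * destruct Sd as [_ W]; inversion W; auto.
      * eapply Hst. eapply Sys_Sync; [apply St_OutL|apply St_Ext; left; reflexivity|simpl; auto].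
      * eapply Hst. apply Sys_L. apply St_IntTau. simpl; lia. left; reflexivity.
    + subst. injection E1; intros; subst. destruct (In_map_dual_inv _ _ _ Hi) as [x [Hx Ex]]; subst.
      eapply Hst. eapply Sys_Sync; [apply St_OutL|apply St_Ext; eauto|simpl; auto].
  - no_choice Aa. subst. exfalso.
    destruct Ab as [E|[bs0 [l0 [x [E1 [Hi E2]]]]]].
    + subst. destruct l as [|[l1 x] [|q bs1]].
      * destruct Sd as [_ W]; inversion W; auto.
      * eapply Hst. eapply Sys_Sync; [apply St_Ext; left; reflexivity|apply St_OutL|simpl; auto].
      * eapply Hst. apply Sys_R. apply St_IntTau. simpl; lia. left; reflexivity.
    + subst. injection E1; intros; subst.
      eapply Hst. eapply Sys_Sync; [apply St_Ext; apply In_map_dual; eauto|apply St_OutL|simpl; auto].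
  - simpl in Nc; tauto.
  - exfalso; eapply SC_not_Var; eauto.
Qed.

Lemma dual_Mu_inv (c : term) x body : dual c = Mu x body -> exists c0, c = Mu x c0 /\ body = dualE [(x, Mu x c0)] c0.
Proof. destruct c; simpl; intros E; try discriminate. injection E; intros; subst. eauto. Qed.

Lemma dual_rel_tau_l a b a' : dual_rel a b -> step a ATau a' -> dual_rel a' b.
Proof.
  intros [c [d [Sc [Sd [Ucd [Aa Ab]]]]]] H. inversion H; subst.
  - destruct Aa as [E|[bs0 [l0 [y [E1 [Hi E2]]]]]].
    + exists c, d; refine (conj _ (conj _ (conj _ (conj _ _)))); auto. right. exists bs, l, s. rewrite E. auto.
    + injection E2; intros; subst. simpl in *. lia.
  - pose proof (@reach_choice_Mu _ _ _ _ Aa eq_refl) as Ea. clear Aa. rename Ea into Aa.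
    destruct (dual_Mu_inv _ (eq_sym Aa)) as [c0 [Ec Eb]]; subst.
    exists (subst x (Mu x c0) c0), d. refine (conj _ (conj _ (conj _ (conj _ _)))); auto.
    + apply SC_unfold; auto.
    + eapply unfolds_related_unfold; eauto.
    + left. rewrite <- dual_unfold by (apply SC_closed; auto). rewrite Aa. reflexivity.
Qed.

Lemma dual_rel_tau_r a b b' : dual_rel a b -> step b ATau b' -> dual_rel a b'.
Proof.
  intros [c [d [Sc [Sd [Ucd [Aa Ab]]]]]] H. inversion H; subst.
  - destruct Ab as [E|[bs0 [l0 [y [E1 [Hi E2]]]]]].
    + exists c, d; refine (conj _ (conj _ (conj _ (conj _ _)))); auto. right. exists bs, l, s. rewrite E. auto.
    + injection E2; intros; subst. simpl in *. lia.
  - pose proof (@reach_choice_Mu _ _ _ _ Ab eq_refl) as Ea. subst d.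
    exists c, (subst x (Mu x s) s). refine (conj _ (conj _ (conj _ (conj _ _)))); auto.
    + apply SC_unfold; auto.
    + destruct Ucd as [U|U].
      * left. eapply unfolds_trans; eauto. constructor. constructor.
      * inversion U; subst; [left; constructor; constructor | right; auto].
Qed.

Lemma dual_rel_sync a b a' b' a1 a2 : dual_rel a b -> step a a1 a' -> step b a2 b' ->
  matches leb B a1 a2 -> dual_rel a' b'.
Proof.
  intros [c [d [Sc [Sd [Ucd [Aa Ab]]]]]] Ha Hb Hm.
  assert (Nc : not_Mu c).
  { destruct c; simpl; auto. no_choice Aa. subst a.
    match goal with H : step (dual (Mu _ _)) _ _ |- _ => inversion H; subst end.
    nomatch. }
  assert (Nd : not_Mu d).
  { destruct d; simpl; auto. no_choice Ab. subst b.
    match goal with H : step (Mu _ _) _ _ |- _ => inversion H; subst end.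
    nomatch. }
  pose proof (unfolds_related_eq Ucd Nc Nd); subst d.
  destruct c; simpl in Aa.
  - no_choice Aa. subst. cbn [dual dualE close_env fold_right] in *.
    match goal with H : step One _ _ |- _ => inversion H; subst end.
    nomatch.
  - no_choice Aa. no_choice Ab. subst. cbn [dual dualE close_env fold_right] in *.
    match goal with H : step (OutT _ _) _ _ |- _ => inversion H; subst end.
    match goal with H : step (InT _ _) _ _ |- _ => inversion H; subst end.
    apply dual_rel_diag. eapply SC_InT_inv; eauto.
  - no_choice Aa. no_choice Ab. subst. cbn [dual dualE close_env fold_right] in *.
    match goal with H : step (InT _ _) _ _ |- _ => inversion H; subst end.
    match goal with H : step (OutT _ _) _ _ |- _ => inversion H; subst end.
    apply dual_rel_diag. eapply SC_OutT_inv; eauto.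
  - no_choice Aa. no_choice Ab. subst. cbn [dual dualE close_env fold_right] in *.
    match goal with H : step (InS _ _) _ _ |- _ => inversion H; subst end.
    match goal with H : step (OutS _ _) _ _ |- _ => inversion H; subst end.
    apply dual_rel_diag. eapply SC_OutS_inv; eauto.
  - no_choice Aa. no_choice Ab. subst. cbn [dual dualE close_env fold_right] in *.
    match goal with H : step (OutS _ _) _ _ |- _ => inversion H; subst end.
    match goal with H : step (InS _ _) _ _ |- _ => inversion H; subst end.
    apply dual_rel_diag. eapply SC_InS_inv; eauto.
  - no_choice Ab. subst b.
    match goal with H : step (Ext _) _ _ |- _ => inversion H; subst end.
    assert (Hin : exists l1, a1 = AOutL BT l1 /\ In (l1, a') (map (fun p => (fst p, dualE [] (snd p))) l)).
    { eapply reach_choice_Int_step; eauto. intro; subst; nomatch. }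
    destruct Hin as [l1 [E1 Hi]]; subst a1. simpl in *. subst l1.
    destruct (In_map_dual_inv _ _ _ Hi) as [x [Hx Ex]]; subst a'.
    assert (x = b') by (eapply NoDup_fst_In_inj; eauto; eapply SC_Ext_NoDup; eauto). subst x.
    apply dual_rel_diag. eapply SC_Ext_branch; eauto.
  - no_choice Aa. subst a. cbn [dual dualE] in *.
    match goal with H : step (Ext _) _ _ |- _ => inversion H; subst end.
    destruct (In_map_dual_inv _ _ _ ltac:(eassumption)) as [x [Hx Ex]]; subst a'.
    assert (Hin : exists l1, a2 = AOutL BT l1 /\ In (l1, b') l).
    { eapply reach_choice_Int_step; eauto. intro; subst; nomatch. }
    destruct Hin as [l1 [E1 Hi]]; subst a2. simpl in *. subst l1.
    assert (x = b') by (eapply NoDup_fst_In_inj; eauto; eapply SC_Int_NoDup; eauto). subst x.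
    apply dual_rel_diag. eapply SC_Int_branch; eauto.
  - simpl in Nc; tauto.
  - exfalso; eapply SC_not_Var; eauto.
Qed.

Lemma dual_rel_step a b a' b' : dual_rel a b -> sys_tau leb B a b a' b' -> dual_rel a' b'.
Proof.
  intros D H. inversion H; subst.
  - eapply dual_rel_tau_l; eauto.
  - eapply dual_rel_tau_r; eauto.
  - eapply dual_rel_sync; eauto.
Qed.

Lemma dual_complies (s : term) : SC s -> complies leb B (dual s) s.
Proof.
  intros H. exists dual_rel. split.
  - intros a b Hab. split. apply dual_rel_stuck; auto. intros; eapply dual_rel_step; eauto.
  - exists s, s; refine (conj _ (conj _ (conj _ (conj _ _)))); [auto|auto|left; constructor|left; auto|left; auto].
Qed.

End DualComp.

(** * A B-compliant client following a B'-compliant one *)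

Definition build_InT (F : term -> term -> term) (s r' : term) : term :=
  match unfold_nf s with Some (OutT _ s1) => F r' s1 | _ => r' end.

Definition build_OutT (F : term -> term -> term) (s r' : term) : term :=
  match unfold_nf s with Some (InT _ s1) => F r' s1 | _ => r' end.

Definition build_OutS (F : term -> term -> term) (s c r' : term) : term :=
  match unfold_nf s with Some (InS tau s1) => OutS tau (F r' s1) | _ => OutS c r' end.

Definition build_InS (F : term -> term -> term) (s c r' : term) : term :=
  match unfold_nf s with Some (OutS sg s1) => InS sg (F r' s1) | _ => InS c r' end.

Definition build_Ext (F : term -> term -> term) (s : term) (p : L * term) : term :=
  match unfold_nf s with
  | Some (Int cs) => match lookup_label (fst p) cs with Some x => F (snd p) x | None => snd p end
  | _ => snd p end.

Definition build_Int (F : term -> term -> term) (s : term) (p : L * term) : term :=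
  match unfold_nf s with
  | Some (Ext cs) => match lookup_label (fst p) cs with Some x => F (snd p) x | None => snd p end
  | _ => snd p end.

(* [build k r s] follows [r] against the server [s]: a higher-order message
   carries the payload of the matching prefix of [s] and the continuation is
   built against the continuation of [s]; where [s] has no matching prefix it
   continues as the continuation of [r]. *)
Fixpoint build (k : nat) (r s : term) : term :=
  match k with
  | 0 => dual s
  | S k' =>
    match r with
    | One => One
    | Var _ _ x => Var BT L x
    | Mu x b => build k' (subst x (Mu x b) b) s
    | InT t r' => InT t (build_InT (build k') s r')
    | OutT t r' => OutT t (build_OutT (build k') s r')
    | OutS c r' => build_OutS (build k') s c r'
    | InS c r' => build_InS (build k') s c r'
    | Ext bs => Ext (map (fun p => (fst p, build_Ext (build k') s p)) bs)
    | Int bs => Int (map (fun p => (fst p, build_Int (build k') s p)) bs)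
    end
  end.

Lemma build_OutS_shape F (s c r' : term) : exists p q, build_OutS F s c r' = OutS p q.
Proof. unfold build_OutS. destruct (unfold_nf s) as [[]|]; eauto. Qed.

Lemma build_InS_shape F (s c r' : term) : exists p q, build_InS F s c r' = InS p q.
Proof. unfold build_InS. destruct (unfold_nf s) as [[]|]; eauto. Qed.

Lemma SC_build k : forall r s, SC r -> SC s -> SC (build k r s).
Proof.
  induction k as [|k IH]; intros r s Hr Hs; simpl.
  - apply SC_dual; auto.
  - destruct r.
    + apply SC_One.
    + apply SC_InT. unfold build_InT. destruct (unfold_nf s) as [t0|] eqn:En; [destruct t0|]; try (eapply SC_InT_inv; eauto; fail).
      apply IH. eapply SC_InT_inv; eauto. eapply SC_OutT_inv; eapply unfold_nf_SC; eauto.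
    + apply SC_OutT. unfold build_OutT. destruct (unfold_nf s) as [t0|] eqn:En; [destruct t0|]; try (eapply SC_OutT_inv; eauto; fail).
      apply IH. eapply SC_OutT_inv; eauto. eapply SC_InT_inv; eapply unfold_nf_SC; eauto.
    + unfold build_OutS. destruct (unfold_nf s) as [t0|] eqn:En; [destruct t0|]; try (exact Hr).
      apply SC_OutS. eapply SC_InS_payload; eapply unfold_nf_SC; eauto.
      apply IH. eapply SC_OutS_inv; eauto. eapply SC_InS_inv; eapply unfold_nf_SC; eauto.
    + unfold build_InS. destruct (unfold_nf s) as [t0|] eqn:En; [destruct t0|]; try (exact Hr).
      apply SC_InS. eapply SC_OutS_payload; eapply unfold_nf_SC; eauto.
      apply IH. eapply SC_InS_inv; eauto. eapply SC_OutS_inv; eapply unfold_nf_SC; eauto.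
    + apply SC_Ext.
      * intro E; apply map_eq_nil in E. eapply SC_Ext_nonempty; eauto.
      * rewrite map_map; simpl. eapply SC_Ext_NoDup; eauto.
      * intros p Hp. apply in_map_iff in Hp. destruct Hp as [[l0 x0] [E Hp]]; subst; simpl.
        assert (Sx : SC x0) by (eapply SC_Ext_branch; eauto).
        unfold build_Ext. destruct (unfold_nf s) as [t0|] eqn:En; [destruct t0|]; simpl; auto.
        destruct (lookup_label l0 l1) eqn:El; auto. apply IH; auto.
        eapply SC_Int_branch. eapply unfold_nf_SC; eauto. apply lookup_label_In; eauto.
    + apply SC_Int.
      * intro E; apply map_eq_nil in E. eapply SC_Int_nonempty; eauto.
      * rewrite map_map; simpl. eapply SC_Int_NoDup; eauto.
      * intros p Hp. apply in_map_iff in Hp. destruct Hp as [[l0 x0] [E Hp]]; subst; simpl.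
        assert (Sx : SC x0) by (eapply SC_Int_branch; eauto).
        unfold build_Int. destruct (unfold_nf s) as [t0|] eqn:En; [destruct t0|]; simpl; auto.
        destruct (lookup_label l0 l1) eqn:El; auto. apply IH; auto.
        eapply SC_Ext_branch. eapply unfold_nf_SC; eauto. apply lookup_label_In; eauto.
    + apply IH; auto. apply SC_unfold; auto.
    + exfalso; eapply SC_not_Var; eauto.
Qed.

Section Monotonicity.
Variables B B' : term -> term -> Prop.
Hypothesis B_refl : forall s, SC s -> B s s.
Hypothesis B_sub_B' : forall x y, B x y -> B' x y.
Hypothesis B'_trans : forall x y z, B' x y -> B' y z -> B' x z.

Definition build_rel (X s' : term) : Prop :=
  complies leb B X s' \/
  exists k r s, X = build k r s /\ complies leb B' r s /\ SC r /\ SC s /\ taus s s'.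

Lemma build_rel_intro k r s s' : complies leb B' r s -> SC r -> SC s -> taus s s' ->
  build_rel (build k r s) s'.
Proof. intros; right; exists k, r, s; auto. Qed.

Ltac invsys H := inversion H as [? ? ? Hx | ? ? ? Hx | ? ? ? ? a1 a2 Hx1 Hx2 Hm]; subst.

Ltac unfold_nf_of T En :=
  match type of T with taus ?s ?sp =>
    assert (En : unfold_nf s = Some sp)
      by (apply taus_unfold_nf_eq; [exact T | exact I | intros ? E; discriminate E]) end.

Section BuildStep.
Variables (k : nat) (r s s' : term).
Hypotheses (Cr : complies leb B' r s') (Sr : SC r) (Ss : SC s) (T : taus s s').
Let Ss' : SC s' := taus_SC T Ss.

Lemma build_progress r1 s1 : not_Mu r -> sys_tau leb B' r s' r1 s1 ->
  exists X' s'', sys_tau leb B (build (S k) r s) s' X' s''.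
Proof.
  intros Nr H. invsys H.
  - inversion Hx; subst; [|contradiction].
    do 2 eexists. apply Sys_L. simpl. apply St_IntTau.
    + rewrite length_map; auto.
    + apply in_map_iff. exists (l, s0); auto.
  - do 2 eexists; apply Sys_R; eauto.
  - destruct r as [ | t r' | t r' | c r' | c r' | bs | bs | x b | x ]; simpl.
    + inversion Hx1; subst; nomatch.
    + inversion Hx1; subst. do 2 eexists.
      eapply Sys_Sync; [apply St_InT|eassumption|destruct a2; simpl in *; auto].
    + inversion Hx1; subst. do 2 eexists.
      eapply Sys_Sync; [apply St_OutT|eassumption|destruct a2; simpl in *; auto].
    + inversion Hx1; subst. destruct a2; simpl in Hm; try contradiction.
      inversion Hx2; subst. unfold_nf_of T En.
      unfold build_OutS. rewrite En. do 2 eexists.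
      eapply Sys_Sync; [apply St_OutS|apply St_InS|simpl].
      apply B_refl. eapply SC_InS_payload; eauto.
    + inversion Hx1; subst. destruct a2; simpl in Hm; try contradiction.
      inversion Hx2; subst. unfold_nf_of T En.
      unfold build_InS. rewrite En. do 2 eexists.
      eapply Sys_Sync; [apply St_InS|apply St_OutS|simpl].
      apply B_refl. eapply SC_OutS_payload; eauto.
    + inversion Hx1; subst. destruct a2; simpl in Hm; try contradiction. subst.
      do 2 eexists. eapply Sys_Sync; [apply St_Ext|exact Hx2|simpl; reflexivity].
      apply in_map_iff. exists (l0, r1); auto.
    + inversion Hx1; subst; [|nomatch]. destruct a2; simpl in Hm; try contradiction. subst.
      do 2 eexists. eapply Sys_Sync; [apply St_OutL|exact Hx2|simpl; reflexivity].
    + contradiction.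
    + exfalso; eapply SC_not_Var; eauto.
Qed.

Lemma build_sync_rel X' a1 a2 s'' : not_Mu r ->
  step (build (S k) r s) a1 X' -> step s' a2 s'' -> matches leb B a1 a2 -> build_rel X' s''.
Proof.
  intros Nr Hx1 Hx2 Hm.
  destruct r as [ | t r' | t r' | c r' | c r' | bs | bs | x b | x ]; simpl in Hx1.
  - inversion Hx1; subst; nomatch.
  - inversion Hx1; subst. destruct a2; simpl in Hm; try contradiction.
    inversion Hx2; subst. unfold_nf_of T En. unfold build_InT. rewrite En.
    apply build_rel_intro; [|eapply SC_InT_inv; eauto|eapply SC_OutT_inv; eauto|constructor].
    eapply complies_step; [exact Cr|]. eapply Sys_Sync; [apply St_InT|apply St_OutT|simpl; auto].
  - inversion Hx1; subst. destruct a2; simpl in Hm; try contradiction.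
    inversion Hx2; subst. unfold_nf_of T En. unfold build_OutT. rewrite En.
    apply build_rel_intro; [|eapply SC_OutT_inv; eauto|eapply SC_InT_inv; eauto|constructor].
    eapply complies_step; [exact Cr|]. eapply Sys_Sync; [apply St_OutT|apply St_InT|simpl; auto].
  - destruct (build_OutS_shape (build k) s c r') as [p [q Eb]]. rewrite Eb in Hx1.
    inversion Hx1; subst. destruct a2; simpl in Hm; try contradiction.
    inversion Hx2; subst. unfold_nf_of T En. unfold build_OutS in Eb. rewrite En in Eb.
    injection Eb as <- <-.
    apply build_rel_intro; [|eapply SC_OutS_inv; eauto|eapply SC_InS_inv; eauto|constructor].
    eapply complies_step; [exact Cr|]. eapply Sys_Sync; [apply St_OutS|apply St_InS|].
    eapply complies_sync; [exact Cr|apply only_step_OutS|apply only_step_InS|discriminate|discriminate|apply OutS_no_check].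
  - destruct (build_InS_shape (build k) s c r') as [p [q Eb]]. rewrite Eb in Hx1.
    inversion Hx1; subst. destruct a2; simpl in Hm; try contradiction.
    inversion Hx2; subst. unfold_nf_of T En. unfold build_InS in Eb. rewrite En in Eb.
    injection Eb as <- <-.
    apply build_rel_intro; [|eapply SC_InS_inv; eauto|eapply SC_OutS_inv; eauto|constructor].
    eapply complies_step; [exact Cr|]. eapply Sys_Sync; [apply St_InS|apply St_OutS|].
    eapply complies_sync; [exact Cr|apply only_step_InS|apply only_step_OutS|discriminate|discriminate|apply InS_no_check].
  - inversion Hx1; subst. apply in_map_iff in H0. destruct H0 as [[l1 r1] [E Hin]].
    injection E as <- <-. destruct a2; simpl in Hm; try contradiction. subst.
    inversion Hx2; subst.
    destruct (taus_unfold_nf_choice T) as [cs [En Hcs]].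
    assert (Scs : SC (Int cs)) by (eapply unfold_nf_SC; eauto).
    unfold build_Ext. rewrite En. simpl. rewrite (lookup_label_eq _ _ _ (SC_Int_NoDup Scs) Hcs).
    apply build_rel_intro; [|eapply SC_Ext_branch; eauto|eapply step_SC; eauto|constructor].
    eapply complies_step; [exact Cr|]. eapply Sys_Sync; [apply St_Ext; eauto|apply St_OutL|simpl; reflexivity].
  - inversion Hx1; subst; [|nomatch].
    destruct bs as [|[l1 r1] [|q bs1]]; simpl in *; try discriminate.
    match goal with E : (_ :: nil) = (_ :: nil) |- _ => injection E as -> -> end.
    destruct a2; simpl in Hm; try contradiction. subst.
    inversion Hx2; subst. unfold_nf_of T En.
    assert (Scs : SC (Ext bs)) by (eapply unfold_nf_SC; eauto).
    unfold build_Int. rewrite En. simpl.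
    match goal with Hi : In _ bs |- _ => rewrite (lookup_label_eq _ _ _ (SC_Ext_NoDup Scs) Hi) end.
    apply build_rel_intro; [|eapply SC_Int_branch; [eauto|left; reflexivity]|eapply step_SC; eauto|constructor].
    eapply complies_step; [exact Cr|]. eapply Sys_Sync; [apply St_OutL|apply St_Ext; eauto|simpl; reflexivity].
  - contradiction.
  - exfalso; eapply SC_not_Var; eauto.
Qed.

End BuildStep.

Lemma build_tau_step k r s X' : not_Mu r -> step (build (S k) r s) ATau X' ->
  exists bs l r1, r = Int bs /\ In (l, r1) bs /\ 1 < length bs /\ X' = build (S k) (Int [(l, r1)]) s.
Proof.
  intros Nr H. destruct r; simpl in H; try solve [inversion H | contradiction].
  - destruct (build_OutS_shape (build k) s r1 r2) as [p [q E]]. rewrite E in H. inversion H.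
  - destruct (build_InS_shape (build k) s r1 r2) as [p [q E]]. rewrite E in H. inversion H.
  - inversion H; subst.
    match goal with Hi : In _ (map _ _) |- _ => apply in_map_iff in Hi; destruct Hi as [[l1 r1] [E Hin]] end.
    injection E as <- <-. exists l, l1, r1. rewrite length_map in *. auto.
Qed.

Lemma build_rel_step k r s s' : complies leb B' r s -> SC r -> SC s -> taus s s' -> not_Mu r ->
  forall X' s'', sys_tau leb B (build (S k) r s) s' X' s'' -> build_rel X' s''.
Proof.
  intros Cr Sr Ss T Nr X' s'' H.
  assert (Cr' : complies leb B' r s') by (eapply complies_taus; eauto).
  invsys H.
  - destruct (build_tau_step _ _ _ Nr Hx) as [bs [l [r1 [-> [Hin [Hlen ->]]]]]].
    apply build_rel_intro; [|eapply SC_Int_choice; eauto|auto|auto].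
    eapply complies_step; [exact Cr|]. apply Sys_L. apply St_IntTau; auto.
  - apply build_rel_intro; auto. eapply taus_snoc; eauto.
  - eapply build_sync_rel; eauto.
Qed.

Lemma build_rel_spec k : forall r s s', complies leb B' r s -> SC r -> SC s -> taus s s' ->
  ((forall a' b', ~ sys_tau leb B (build k r s) s' a' b') -> can_check (build k r s) /\ can_check s') /\
  (forall a' b', sys_tau leb B (build k r s) s' a' b' -> build_rel a' b').
Proof.
  induction k as [|k IH]; intros r s s' Cr Sr Ss T.
  - assert (D : complies leb B (dual s) s') by (eapply complies_taus; [apply dual_complies|]; eauto).
    split; [apply complies_stuck; auto|intros; left; eapply complies_step; eauto].
  - destruct (classic (not_Mu r)) as [Nr|Mr].
    2:{ destruct r; try (exfalso; apply Mr; exact I). apply IH; auto.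
        - eapply complies_step; [exact Cr|]. apply Sys_L. apply St_Mu.
        - apply SC_unfold; auto. }
    assert (Cr' : complies leb B' r s') by (eapply complies_taus; eauto).
    split; [|apply build_rel_step; auto].
    intros Hst. destruct (classic (exists r1 s1, sys_tau leb B' r s' r1 s1)) as [[r1 [s1 H]]|Hn].
    + exfalso. destruct (build_progress k Cr' Sr Ss T Nr H) as [X' [s'' H']]. eapply Hst; eauto.
    + destruct (complies_stuck Cr') as [Ck Cs']; [intros ? ? H; apply Hn; eauto|].
      apply can_check_One in Ck; subst r. split; [eexists; constructor|auto].
Qed.

Lemma build_rel_compliance : compliance_rel leb B build_rel.
Proof.
  intros X s' [HC|[k [r [s [E [C [Sr [Ss T]]]]]]]].
  - split. apply complies_stuck; auto. intros; left; eapply complies_step; eauto.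
  - subst X. apply build_rel_spec; auto.
Qed.

Lemma build_complies k (r s : term) : complies leb B' r s -> SC r -> SC s -> complies leb B (build k r s) s.
Proof. intros C Sr Ss. exists build_rel. split; [apply build_rel_compliance|apply build_rel_intro; auto; constructor]. Qed.

(** * Simulating a failing run *)

Lemma matches_mono a1 a2 : matches leb B a1 a2 -> matches leb B' a1 a2.
Proof. destruct a1; destruct a2; simpl; auto. Qed.

Lemma sys_tau_mono (a b a' b' : term) : sys_tau leb B a b a' b' -> sys_tau leb B' a b a' b'.
Proof. intros H; inversion H; subst. apply Sys_L; auto. apply Sys_R; auto.
  eapply Sys_Sync; eauto. apply matches_mono; auto. Qed.

Lemma build_move_transfer k (r s s2 X' s2' : term) : 0 < k -> complies leb B' r s -> SC r -> SC s ->
  sys_tau leb B (build k r s) s2 X' s2' -> exists r' s2'', sys_tau leb B' r s2 r' s2''.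
Proof.
  intros Hk C Sr Ss H. destruct k as [|k]; [lia|].
  destruct r as [ | t r' | t r' | c r' | c r' | bs | bs | x b | x ]; simpl in H.
  - invsys H. inversion Hx. do 2 eexists; apply Sys_R; eauto. inversion Hx1; subst; nomatch.
  - invsys H. inversion Hx. do 2 eexists; apply Sys_R; eauto.
    inversion Hx1; subst. do 2 eexists; eapply Sys_Sync; [apply St_InT|exact Hx2|destruct a2; simpl in *; auto].
  - invsys H. inversion Hx. do 2 eexists; apply Sys_R; eauto.
    inversion Hx1; subst. do 2 eexists; eapply Sys_Sync; [apply St_OutT|exact Hx2|destruct a2; simpl in *; auto].
  - unfold build_OutS in H. destruct (unfold_nf s) as [t0|] eqn:En; [destruct t0|];
      try (do 2 eexists; eapply sys_tau_mono; exact H).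
    invsys H. inversion Hx. do 2 eexists; apply Sys_R; eauto.
    inversion Hx1; subst. destruct a2; simpl in Hm; try contradiction.
    do 2 eexists; eapply Sys_Sync; [apply St_OutS|exact Hx2|simpl].
    (* the payload of [r] B'-matches that of [s], which B-matches that of [s2] *)
    apply B'_trans with t0_1; [|apply B_sub_B'; auto].
    eapply complies_sync with (a1 := AOutS c) (a2 := AInS t0_1);
      [eapply complies_unfold_nf; eauto|apply only_step_OutS|apply only_step_InS|discriminate|discriminate|apply OutS_no_check].
  - unfold build_InS in H. destruct (unfold_nf s) as [t0|] eqn:En; [destruct t0|];
      try (do 2 eexists; eapply sys_tau_mono; exact H).
    invsys H. inversion Hx. do 2 eexists; apply Sys_R; eauto.
    inversion Hx1; subst. destruct a2; simpl in Hm; try contradiction.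
    do 2 eexists; eapply Sys_Sync; [apply St_InS|exact Hx2|simpl].
    apply B'_trans with t0_1; [apply B_sub_B'; auto|].
    eapply complies_sync with (a1 := AInS c) (a2 := AOutS t0_1);
      [eapply complies_unfold_nf; eauto|apply only_step_InS|apply only_step_OutS|discriminate|discriminate|apply InS_no_check].
  - invsys H. inversion Hx. do 2 eexists; apply Sys_R; eauto.
    inversion Hx1; subst.
    match goal with Hi : In _ (map _ _) |- _ => apply in_map_iff in Hi; destruct Hi as [[l1 r1] [E Hin]] end.
    simpl in E; injection E as E1 E2. subst.
    destruct a2; simpl in Hm; try contradiction. subst.
    do 2 eexists; eapply Sys_Sync; [apply St_Ext; eassumption|exact Hx2|simpl; auto].
  - invsys H.
    + inversion Hx; subst.
      match goal with Hi : In _ (map _ _) |- _ => apply in_map_iff in Hi; destruct Hi as [[l1 r1] [E Hin]] end.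
      do 2 eexists; apply Sys_L; apply St_IntTau; [rewrite length_map in *; auto|eassumption].
    + do 2 eexists; apply Sys_R; eauto.
    + inversion Hx1; subst; [|nomatch].
      destruct bs as [|[l1 r1] [|q bs1]]; simpl in *; try discriminate.
      destruct a2; simpl in Hm; try contradiction.
      match goal with E : [_] = [_] |- _ => injection E; intros; subst end.
      do 2 eexists; eapply Sys_Sync; [apply St_OutL|exact Hx2|simpl; auto].
  - do 2 eexists; apply Sys_L; apply St_Mu.
  - exfalso; eapply SC_not_Var; eauto.
Qed.

Lemma build_can_check k (r s : term) : 0 < k -> SC r -> can_check (build k r s) -> r = One \/ exists x b, r = Mu x b.
Proof.
  intros Hk Sr Hc. destruct k as [|k]; [lia|]. apply can_check_One in Hc.
  destruct r; simpl in Hc; try discriminate; eauto.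
  all: try (destruct (build_OutS_shape (build k) s r1 r2) as [p [q E]]; rewrite E in Hc; discriminate).
  all: try (destruct (build_InS_shape (build k) s r1 r2) as [p [q E]]; rewrite E in Hc; discriminate).
  all: exfalso; eapply SC_not_Var; eauto.
Qed.

(* Unfolding a recursion of [r] consumes fuel without moving [X], so [n < k]
   leaves enough fuel to follow a run of length [n]. *)
Definition sim_rel (X r : term) (n : nat) : Prop :=
  X = r \/ exists k s, X = build k r s /\ n < k /\ complies leb B' r s /\ SC r /\ SC s.

Lemma sim_rel_build n k r s : n < k -> complies leb B' r s -> SC r -> SC s -> sim_rel (build k r s) r n.
Proof. intros; right; exists k, s; auto. Qed.

Section SimSync.
Variables (n k : nat) (r s s2 : term).
Hypotheses (Hk : n < k) (C : complies leb B' r s) (Sr : SC r) (Ss : SC s)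
  (CX : complies leb B (build (S k) r s) s2).

Lemma sim_sync_build a1 a2 r1 s2' : step r a1 r1 -> step s2 a2 s2' -> matches leb B' a1 a2 ->
  exists X1, sim_rel X1 r1 n /\ complies leb B X1 s2'.
Proof.
  intros Hx1 Hx2 Hm.
  destruct r as [ | t r' | t r' | c r' | c r' | bs | bs | x b | x ]; simpl in CX.
  - inversion Hx1; subst; nomatch.
  - inversion Hx1; subst. destruct a2; simpl in Hm; try contradiction.
    exists (build_InT (build k) s r1). split.
    + unfold build_InT. destruct (unfold_nf s) as [[]|] eqn:En; try (left; reflexivity).
      pose proof (complies_unfold_nf C En) as C2.
      apply sim_rel_build; [auto| |eapply SC_InT_inv; eauto|eapply SC_OutT_inv, unfold_nf_SC; eauto].
      eapply complies_step; [exact C2|]. eapply Sys_Sync; [apply St_InT|apply St_OutT|].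
      eapply complies_sync; [exact C2|apply only_step_InT|apply only_step_OutT|discriminate|discriminate|apply InT_no_check].
    + eapply complies_step; [exact CX|]. eapply Sys_Sync; [apply St_InT|exact Hx2|simpl; auto].
  - inversion Hx1; subst. destruct a2; simpl in Hm; try contradiction.
    exists (build_OutT (build k) s r1). split.
    + unfold build_OutT. destruct (unfold_nf s) as [[]|] eqn:En; try (left; reflexivity).
      pose proof (complies_unfold_nf C En) as C2.
      apply sim_rel_build; [auto| |eapply SC_OutT_inv; eauto|eapply SC_InT_inv, unfold_nf_SC; eauto].
      eapply complies_step; [exact C2|]. eapply Sys_Sync; [apply St_OutT|apply St_InT|].
      eapply complies_sync; [exact C2|apply only_step_OutT|apply only_step_InT|discriminate|discriminate|apply OutT_no_check].
    + eapply complies_step; [exact CX|]. eapply Sys_Sync; [apply St_OutT|exact Hx2|simpl; auto].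
  - inversion Hx1; subst. destruct a2; simpl in Hm; try contradiction. inversion Hx2; subst.
    destruct (build_OutS_shape (build k) s c r1) as [p [q Eb]]. rewrite Eb in CX. exists q. split.
    + unfold build_OutS in Eb. destruct (unfold_nf s) as [[]|] eqn:En; injection Eb as <- <-;
        try (left; reflexivity).
      pose proof (complies_unfold_nf C En) as C2.
      apply sim_rel_build; [auto| |eapply SC_OutS_inv; eauto|eapply SC_InS_inv, unfold_nf_SC; eauto].
      eapply complies_step; [exact C2|]. eapply Sys_Sync; [apply St_OutS|apply St_InS|].
      eapply complies_sync; [exact C2|apply only_step_OutS|apply only_step_InS|discriminate|discriminate|apply OutS_no_check].
    + eapply complies_step; [exact CX|]. eapply Sys_Sync; [apply St_OutS|apply St_InS|].
      eapply complies_sync; [exact CX|apply only_step_OutS|apply only_step_InS|discriminate|discriminate|apply OutS_no_check].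
  - inversion Hx1; subst. destruct a2; simpl in Hm; try contradiction. inversion Hx2; subst.
    destruct (build_InS_shape (build k) s c r1) as [p [q Eb]]. rewrite Eb in CX. exists q. split.
    + unfold build_InS in Eb. destruct (unfold_nf s) as [[]|] eqn:En; injection Eb as <- <-;
        try (left; reflexivity).
      pose proof (complies_unfold_nf C En) as C2.
      apply sim_rel_build; [auto| |eapply SC_InS_inv; eauto|eapply SC_OutS_inv, unfold_nf_SC; eauto].
      eapply complies_step; [exact C2|]. eapply Sys_Sync; [apply St_InS|apply St_OutS|].
      eapply complies_sync; [exact C2|apply only_step_InS|apply only_step_OutS|discriminate|discriminate|apply InS_no_check].
    + eapply complies_step; [exact CX|]. eapply Sys_Sync; [apply St_InS|apply St_OutS|].
      eapply complies_sync; [exact CX|apply only_step_InS|apply only_step_OutS|discriminate|discriminate|apply InS_no_check].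
  - inversion Hx1; subst. destruct a2; simpl in Hm; try contradiction. subst. inversion Hx2; subst.
    exists (build_Ext (build k) s (l0, r1)). split.
    + unfold build_Ext. destruct (unfold_nf s) as [[]|] eqn:En; try (left; reflexivity).
      simpl. destruct (lookup_label l0 l) as [y|] eqn:El; [|left; reflexivity].
      pose proof (lookup_label_In _ _ El) as Hy.
      assert (C2 : complies leb B' (Ext bs) (Int [(l0, y)]))
        by (eapply complies_Int_choice; [eapply complies_unfold_nf; eauto|exact Hy]).
      apply sim_rel_build; [auto| |eapply SC_Ext_branch; eauto|eapply SC_Int_branch; [eapply unfold_nf_SC; eauto|eauto]].
      eapply complies_step; [exact C2|]. eapply Sys_Sync; [apply St_Ext; eauto|apply St_OutL|simpl; reflexivity].
    + eapply complies_step; [exact CX|]. eapply Sys_Sync; [apply St_Ext|apply St_OutL|simpl; reflexivity].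
      apply in_map_iff. exists (l0, r1); auto.
  - inversion Hx1; subst; [|nomatch]. destruct a2; simpl in Hm; try contradiction. subst. inversion Hx2; subst.
    exists (build_Int (build k) s (l0, r1)). split.
    + unfold build_Int. destruct (unfold_nf s) as [[]|] eqn:En; try (left; reflexivity).
      simpl. destruct (lookup_label l0 l) as [y|] eqn:El; [|left; reflexivity].
      pose proof (lookup_label_In _ _ El) as Hy. pose proof (complies_unfold_nf C En) as C2.
      apply sim_rel_build; [auto| |eapply SC_Int_branch; [eauto|left; reflexivity]|eapply SC_Ext_branch; [eapply unfold_nf_SC; eauto|eauto]].
      eapply complies_step; [exact C2|]. eapply Sys_Sync; [apply St_OutL|apply St_Ext; eauto|simpl; reflexivity].
    + eapply complies_step; [exact CX|]. eapply Sys_Sync; [apply St_OutL|apply St_Ext; eauto|simpl; reflexivity].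
  - inversion Hx1; subst; nomatch.
  - exfalso; eapply SC_not_Var; eauto.
Qed.

End SimSync.

Lemma sim_step_build n k r s s2 r1 s2' : n < k -> complies leb B' r s -> SC r -> SC s ->
  complies leb B (build (S k) r s) s2 -> sys_tau leb B' r s2 r1 s2' ->
  exists X1, sim_rel X1 r1 n /\ complies leb B X1 s2'.
Proof.
  intros Hk C Sr Ss CX H. invsys H.
  - inversion Hx; subst.
    + exists (build (S k) (Int [(l, s0)]) s). split.
      * apply sim_rel_build; [lia| |eapply SC_Int_choice; eauto|auto].
        eapply complies_step; [exact C|apply Sys_L; apply St_IntTau; auto].
      * eapply complies_step; [exact CX|]. apply Sys_L. simpl. apply St_IntTau.
        -- rewrite length_map; auto.
        -- apply in_map_iff. exists (l, s0); auto.
    + exists (build k (subst x (Mu x s0) s0) s). split; [|exact CX].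
      apply sim_rel_build; [lia| |apply SC_unfold; auto|auto].
      eapply complies_step; [exact C|apply Sys_L; apply St_Mu].
  - exists (build (S k) r1 s). split.
    + apply sim_rel_build; auto.
    + eapply complies_step; [exact CX|apply Sys_R; auto].
  - eapply sim_sync_build; eauto.
Qed.

Lemma sim_step n (X r s2 r1 s2' : term) : sim_rel X r (S n) -> complies leb B X s2 ->
  sys_tau leb B' r s2 r1 s2' -> exists X1, sim_rel X1 r1 n /\ complies leb B X1 s2'.
Proof.
  intros [-> | [[|k] [s [-> [Hk [C [Sr Ss]]]]]]] CX H; [| lia |].
  - exists r1. split; [left; auto|]. eapply complies_step; [exact CX|].
    exact (complies_sys_tau_reflect CX H).
  - assert (Hk' : n < k) by lia. eapply sim_step_build; eauto.
Qed.

Lemma bad_run_sim n (r s2 : term) : bad_run B' n r s2 -> forall X, sim_rel X r n -> complies leb B X s2 -> False.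
Proof.
  induction 1 as [a b Hst Hnc | n a b a' b' Hs Hb IH]; intros X HS CX.
  - destruct HS as [E | [k [s [E [Hk [C [Sr Ss]]]]]]].
    + subst. apply Hnc. apply (complies_stuck CX). intros a' b' H. apply (Hst a' b'). apply sys_tau_mono; auto.
    + subst. assert (NoB : forall a' b', ~ sys_tau leb B (build k a s) b a' b').
      { intros a' b' H. destruct (build_move_transfer Hk C Sr Ss H) as [r' [s'' H']]. eapply Hst; eauto. }
      destruct (complies_stuck CX NoB) as [Ck Cb].
      destruct (@build_can_check k a s Hk Sr Ck) as [E|[x [bb E]]]; subst.
      * apply Hnc. split; auto. eexists; constructor.
      * eapply Hst. apply Sys_L. apply St_Mu.
  - destruct (sim_step HS CX Hs) as [X1 [HS1 C1]]. eapply IH; eauto.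
Qed.

Lemma subcontract_mono (s1 s2 : term) : subcontract leb B s1 s2 -> subcontract leb B' s1 s2.
Proof.
  intros [S1 [S2 H12]]. split; [auto|split; [auto|]].
  intros r Sr Cr. apply NNPP; intro Nc. destruct (not_complies_bad_run Nc) as [n Hb].
  assert (SX : SC (build (S n) r s1)) by (apply SC_build; auto).
  assert (CX1 : complies leb B (build (S n) r s1) s1) by (apply build_complies; auto).
  pose proof (H12 _ SX CX1) as CX2.
  apply (bad_run_sim Hb (X := build (S n) r s1)); [apply sim_rel_build|]; auto.
Qed.

End Monotonicity.

Lemma subcontract_preorder (B : term -> term -> Prop) : preorder_SC (subcontract leb B).
Proof.
  split; [|split].
  - intros s1 s2 [S1 [S2 _]]; auto.
  - intros s Hs; split; [auto|split; auto].
  - intros s1 s2 s3 [S1 [S2 H12]] [_ [S3 H23]]; split; [auto|split; auto].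
Qed.

End Subcontracts.

Theorem mainTheorem10 (BT L : Type) (leb : BT -> BT -> Prop)
  (leb_refl : forall t, leb t t)
  (leb_trans : forall t1 t2 t3, leb t1 t2 -> leb t2 t3 -> leb t1 t3) :
  (forall B : term BT L -> term BT L -> Prop,
      preorder_SC B -> preorder_SC (subcontract leb B)) /\
  (forall B B' : term BT L -> term BT L -> Prop,
      preorder_SC B -> preorder_SC B' ->
      (forall s1 s2, B s1 s2 -> B' s1 s2) ->
      forall s1 s2, subcontract leb B s1 s2 -> subcontract leb B' s1 s2).
Proof.
  split.
  - intros B _. apply subcontract_preorder.
  - intros B B' [_ [B_refl _]] [_ [_ B'_trans]] B_sub_B' s1 s2.
    apply subcontract_mono; assumption.
Qed.
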